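(* Assume $S\neq\emptyset$ and let $k\ge\max(1,k_1,\dots,k_m)$. If $\mathcal{Q}_k(\tilde G)$ is closed in $\mathbb{R}[\tilde X]_{2k}$, then $\widetilde{\mathrm{TH}}_k(\tilde G)=\overline{\Omega_k(\tilde G)}$.
   Context: $X=(X_1,\dots,X_n)$, $\tilde X=(X_0,X_1,\dots,X_n)$, $\|\cdot\|_2$ Euclidean norm; $\mathbb{R}[\tilde X]_{2k}$ is the space of polynomials of degree at most $2k$. For $f\in\mathbb{R}[X]$ of degree $d$, its homogenization is $\tilde f(\tilde X)=X_0^df(X/X_0)\in\mathbb{R}[\tilde X]$. Fix $g_1,\dots,g_m\in\mathbb{R}[X]$ and $S=\{x\in\mathbb{R}^n:g_1(x)\ge0,\dots,g_m(x)\ge0\}$. For a finite set $H=\{h_1,\dots,h_r\}$ of polynomials, the $k$-th quadratic module is $\mathcal{Q}_k(H)=\{\sum_{j=0}^r\sigma_jh_j:h_0=1,\ \sigma_j\text{ sums of squares of polynomials},\ \deg(\sigma_jh_j)\le2k\}$. Let $\tilde G=\{\tilde g_1,\dots,\tilde g_m,X_0,\|\tilde X\|_2^2-1,1-\|\tilde X\|_2^2\}$. Let $\mathcal{P}[\tilde X]_1$ be the set of linear forms (homogeneous of degree one) in $\tilde X$ together with $0$. The modified theta body is $\widetilde{\mathrm{TH}}_k(\tilde G)=\{x\in\mathbb{R}^n:\tilde l(1,x)\ge0\ \forall\tilde l\in\mathcal{Q}_k(\tilde G)\cap\mathcal{P}[\tilde X]_1\}$. Moments: for $y=(y_\alpha)_{\alpha\in\mathbb{N}^{n+1},|\alpha|\le2k}$,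 the Riesz functional is $L_y(\sum_\alpha q_\alpha\tilde X^\alpha)=\sum_\alpha q_\alpha y_\alpha$; the moment matrix $M_k(y)$ is indexed by $\alpha,\beta\in\mathbb{N}^{n+1}$, $|\alpha|,|\beta|\le k$, with entries $y_{\alpha+\beta}$; for $p=\sum_\beta p_\beta\tilde X^\beta$ with $d_p=\lceil\deg p/2\rceil\le k$, the localizing matrix $M_{k-d_p}(py)$ is indexed by $|\alpha|,|\gamma|\le k-d_p$ with entries $\sum_\beta p_\beta y_{\alpha+\gamma+\beta}$. With $k_j=\lceil\deg g_j/2\rceil$, the modified Lasserre relaxation is $\Omega_k(\tilde G)=\{x\in\mathbb{R}^n:\exists y=(y_\alpha)_{|\alpha|\le2k}\text{ with }L_y(X_0)=1,\ L_y(X_i)=x_i\ (i=1,\dots,n),\ M_{k-1}(X_0y)\succeq0,\ M_{k-1}((\|\tilde X\|_2^2-1)y)=0,\ M_k(y)\succeq0,\ M_{k-k_j}(\tilde g_jy)\succeq0\ (j=1,\dots,m)\}$. Overline denotes closure. *)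

From Stdlib Require Import Reals List Arith.
Import ListNotations.
Open Scope R_scope.

(** Multi-indices (exponent vectors) and polynomials as finite lists of terms.
    A polynomial is identified with its coefficient function [coef]. *)
Definition mono := list nat.
Definition mpoly := list (mono * R).

Fixpoint rsum {A : Type} (f : A -> R) (l : list A) : R :=
  match l with [] => 0 | a :: l' => f a + rsum f l' end.

Definition mdeg (a : mono) : nat := fold_right Nat.add 0%nat a.

Fixpoint vadd (a b : mono) : mono :=
  match a, b with
  | x :: a', y :: b' => (x + y)%nat :: vadd a' b'
  | [], _ => b
  | _, [] => a
  end.

Definition coef (p : mpoly) (a : mono) : R :=
  rsum (fun t => if list_eq_dec Nat.eq_dec (fst t) a then snd t else 0) p.

Definition wf (N : nat) (p : mpoly) : Prop := Forall (fun t => length (fst t) = N) p.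

Definition peq (p q : mpoly) : Prop := forall a, coef p a = coef q a.

Definition deg_le (d : nat) (p : mpoly) : Prop :=
  forall a, coef p a <> 0 -> (mdeg a <= d)%nat.

(** the degree of p (0 for the zero polynomial) *)
Definition pdeg (p : mpoly) : nat :=
  fold_right Nat.max 0%nat
    (map (fun t => if Req_EM_T (coef p (fst t)) 0 then 0%nat else mdeg (fst t)) p).

Definition halfceil (d : nat) : nat := ((d + 1) / 2)%nat.

Definition pmul (p q : mpoly) : mpoly :=
  flat_map (fun t => map (fun s => (vadd (fst t) (fst s), snd t * snd s)) q) p.

Definition pscale (c : R) (p : mpoly) : mpoly := map (fun t => (fst t, c * snd t)) p.

Definition zeros (N : nat) : mono := repeat 0%nat N.
Definition pone (N : nat) : mpoly := [(zeros N, 1)].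
Definition evec (N i : nat) : mono :=
  map (fun j => if Nat.eqb j i then 1%nat else 0%nat) (seq 0 N).
(** the variable X_i (among N variables X_0..X_{N-1}) *)
Definition pvar (N i : nat) : mpoly := [(evec N i, 1)].

Fixpoint meval (a : mono) (v : list R) : R :=
  match a, v with
  | e :: a', x :: v' => x ^ e * meval a' v'
  | _, _ => 1
  end.
Definition peval (p : mpoly) (v : list R) : R := rsum (fun t => snd t * meval (fst t) v) p.

(** homogenization X_0^d f(X/X_0), d = deg f *)
Definition homog (f : mpoly) : mpoly :=
  map (fun t => ((pdeg f - mdeg (fst t))%nat :: fst t, snd t)) f.

(** ||X~||_2^2 - 1 in N variables *)
Definition nrm1 (N : nat) : mpoly :=
  map (fun i => (map (fun j => if Nat.eqb j i then 2%nat else 0%nat) (seq 0 N), 1)) (seq 0 N)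
  ++ [(zeros N, -1)].

Definition Gtilde (n : nat) (gs : list mpoly) : list mpoly :=
  map homog gs ++ [pvar (S n) 0; nrm1 (S n); pscale (-1) (nrm1 (S n))].

Definition is_sos (N : nat) (s : mpoly) : Prop :=
  exists qs : list mpoly, Forall (wf N) qs /\ peq s (flat_map (fun q => pmul q q) qs).

(** k-th quadratic module Q_k(H) (h_0 = 1) *)
Definition in_Qk (N k : nat) (H : list mpoly) (f : mpoly) : Prop :=
  exists (s0 : mpoly) (ss : list mpoly),
    is_sos N s0 /\ deg_le (2 * k) s0 /\
    Forall (is_sos N) ss /\
    Forall2 (fun s h => deg_le (2 * k) (pmul s h)) ss H /\
    peq f (s0 ++ concat (map (fun sh => pmul (fst sh) (snd sh)) (combine ss H))).

(** Q_k(H) closed in R[X]_{2k} (finite-dimensional, coefficient topology;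
    stated sequentially: coefficientwise limits of elements stay inside) *)
Definition Qk_closed (N k : nat) (H : list mpoly) : Prop :=
  forall (f : nat -> mpoly) (p : mpoly),
    (forall j, in_Qk N k H (f j)) ->
    (forall a, Un_cv (fun j => coef (f j) a) (coef p a)) ->
    in_Qk N k H p.

(** linear forms in N variables (together with 0) *)
Definition is_linform (N : nat) (l : mpoly) : Prop :=
  forall a, coef l a <> 0 -> length a = N /\ mdeg a = 1%nat.

(** modified theta body; points of R^n are lists of length n *)
Definition in_TH (n k : nat) (gs : list mpoly) (x : list R) : Prop :=
  length x = n /\
  forall l, in_Qk (S n) k (Gtilde n gs) l -> is_linform (S n) l -> 0 <= peval l (1 :: x).

Fixpoint monos (N d : nat) : list mono :=
  match N with
  | O => [[]]
  | S N' => flat_map (fun a => map (cons a) (monos N' (d - a))) (seq 0 (S d))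
  end.

Definition Ly (y : mono -> R) (p : mpoly) : R := rsum (fun t => snd t * y (fst t)) p.
Definition momat (y : mono -> R) (a b : mono) : R := y (vadd a b).
Definition locmat (p : mpoly) (y : mono -> R) (a b : mono) : R :=
  rsum (fun t => snd t * y (vadd (vadd a b) (fst t))) p.

Definition psd (idx : list mono) (M : mono -> mono -> R) : Prop :=
  forall v : mono -> R, 0 <= rsum (fun a => rsum (fun b => v a * M a b * v b) idx) idx.

Definition in_Omega (n k : nat) (gs : list mpoly) (x : list R) : Prop :=
  length x = n /\
  exists y : mono -> R,
    Ly y (pvar (S n) 0) = 1 /\
    (forall i, (i < n)%nat -> Ly y (pvar (S n) (S i)) = nth i x 0) /\
    psd (monos (S n) (k - 1)) (locmat (pvar (S n) 0) y) /\
    (forall a b, In a (monos (S n) (k - 1)) -> In b (monos (S n) (k - 1)) ->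
       locmat (nrm1 (S n)) y a b = 0) /\
    psd (monos (S n) k) (momat y) /\
    Forall (fun g => psd (monos (S n) (k - halfceil (pdeg g))) (locmat (homog g) y)) gs.

Definition dist (x y : list R) : R :=
  sqrt (rsum (fun p => (fst p - snd p) ^ 2) (combine x y)).

Definition in_closure (n : nat) (A : list R -> Prop) (x : list R) : Prop :=
  length x = n /\
  forall eps, 0 < eps -> exists z, A z /\ length z = n /\ dist x z < eps.

Definition in_S (n : nat) (gs : list mpoly) (x : list R) : Prop :=
  length x = n /\ Forall (fun g => 0 <= peval g x) gs.

(* Call a truncated moment sequence y admissible when it satisfies the matrix
   conditions of Omega_k (all but the normalisation L_y(X_0) = 1).  The proof
   combines two general facts, developed after the calculus of sparse
   polynomials, finite sums and Riesz functionals: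
   - Duality: y is admissible iff L_y >= 0 on Q_k(G~).  "=>" rests on the
     absence of cancellation among leading terms (graded order) in sums of
     squares, which bounds the degree of every square in a certificate.
   - Separation: a point at positive distance from a convex cone of R^I is
     strictly separated from it, via a nearest point of the cone's closure.
   closure(Omega) <= TH: for l linear in Q_k and z in Omega, l(1,z) = L_y(l) >= 0.
   TH <= closure(Omega): else separation gives a linear l with l(1,x) < 0 and
   L_y(l) >= 0 for all admissible y; closedness of Q_k, separation and duality
   put l in Q_k, contradicting x in TH.  Rescaling admissible y by 1/y(e_0)
   then yields points of Omega converging to x. *)

From Pilot Require Import Defs.
From Stdlib Require Import Reals List Arith Lra Lia Permutation Classical ClassicalEpsilon.
Import ListNotations.
Open Scope R_scope.

Notation mdec := (list_eq_dec Nat.eq_dec).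

Lemma rsum_app {A} (f : A -> R) l1 l2 : rsum f (l1 ++ l2) = rsum f l1 + rsum f l2.
Proof. induction l1; simpl; [lra|rewrite IHl1; lra]. Qed.

Lemma rsum_map {A B} (f : B -> R) (g : A -> B) l : rsum f (map g l) = rsum (fun x => f (g x)) l.
Proof. induction l; simpl; congruence. Qed.

Lemma rsum_flat_map {A B} (f : B -> R) (g : A -> list B) l :
  rsum f (flat_map g l) = rsum (fun x => rsum f (g x)) l.
Proof. induction l; simpl; auto. rewrite rsum_app, IHl; auto. Qed.

Lemma rsum_concat {A} (f : A -> R) l : rsum f (concat l) = rsum (fun x => rsum f x) l.
Proof. induction l; simpl; auto. rewrite rsum_app, IHl; auto. Qed.

Lemma rsum_ext {A} (f g : A -> R) l : (forall x, In x l -> f x = g x) -> rsum f l = rsum g l.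
Proof. induction l; simpl; intros; auto. rewrite H, IHl; auto. Qed.

Lemma rsum_plus {A} (f g : A -> R) l : rsum (fun x => f x + g x) l = rsum f l + rsum g l.
Proof. induction l; simpl; [lra|rewrite IHl; lra]. Qed.

Lemma rsum_minus {A} (f g : A -> R) l : rsum (fun x => f x - g x) l = rsum f l - rsum g l.
Proof. induction l; simpl; [lra|rewrite IHl; lra]. Qed.

Lemma rsum_scal {A} (c : R) (f : A -> R) l : rsum (fun x => c * f x) l = c * rsum f l.
Proof. induction l; simpl; [lra|rewrite IHl; lra]. Qed.

Lemma rsum_scalr {A} (c : R) (f : A -> R) l : rsum (fun x => f x * c) l = rsum f l * c.
Proof. induction l; simpl; [lra|rewrite IHl; lra]. Qed.

Lemma rsum_zero {A} (f : A -> R) l : (forall x, In x l -> f x = 0) -> rsum f l = 0.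
Proof. induction l; simpl; intros; auto. rewrite H, IHl; auto. lra. Qed.

Lemma rsum_nonneg {A} (f : A -> R) l : (forall x, In x l -> 0 <= f x) -> 0 <= rsum f l.
Proof.
  induction l; simpl; intros H; [lra|].
  assert (0 <= f a) by auto. assert (0 <= rsum f l) by auto. lra.
Qed.

Lemma rsum_le {A} (f g : A -> R) l : (forall x, In x l -> f x <= g x) -> rsum f l <= rsum g l.
Proof.
  induction l; simpl; intros H; [lra|].
  assert (f a <= g a) by auto. assert (rsum f l <= rsum g l) by auto. lra.
Qed.

Lemma rsum_abs {A} (f : A -> R) l : Rabs (rsum f l) <= rsum (fun x => Rabs (f x)) l.
Proof.
  induction l; simpl; [rewrite Rabs_R0; lra|].
  eapply Rle_trans; [apply Rabs_triang|]. lra.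
Qed.

Lemma rsum_perm {A} (f : A -> R) l l' : Permutation l l' -> rsum f l = rsum f l'.
Proof. induction 1; simpl; lra. Qed.

Lemma rsum_term_le {A} (f : A -> R) l x :
  (forall y, In y l -> 0 <= f y) -> In x l -> f x <= rsum f l.
Proof.
  induction l; simpl; intros H Hx; [contradiction|].
  destruct Hx as [<-|Hx].
  - assert (0 <= rsum f l) by (apply rsum_nonneg; auto). lra.
  - assert (0 <= f a) by auto. assert (f x <= rsum f l) by (apply IHl; auto). lra.
Qed.

Lemma rsum_nz {A} (f : A -> R) l : rsum f l <> 0 -> exists x, In x l /\ f x <> 0.
Proof.
  intros H. apply NNPP; intros C. apply H. apply rsum_zero. intros x Hx.
  apply NNPP; intros C'. apply C; eauto.
Qed.

Lemma rsum_filter {A} (P : A -> bool) (f : A -> R) l :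
  rsum f l = rsum f (filter P l) + rsum f (filter (fun x => negb (P x)) l).
Proof. induction l; simpl; [lra|]. destruct (P a); simpl; rewrite IHl; lra. Qed.

Lemma rsum_seq_S (f : nat -> R) s m : rsum f (seq (S s) m) = rsum (fun i => f (S i)) (seq s m).
Proof. rewrite <- seq_shift, rsum_map. auto. Qed.

Lemma rsum_indicator (b : mono) (f : mono -> R) A : NoDup A -> In b A ->
  rsum (fun a => if mdec b a then f a else 0) A = f b.
Proof.
  induction 1; simpl; intros Hb; [contradiction|].
  destruct (mdec b x).
  - subst. rewrite rsum_zero; [lra|]. intros y Hy. destruct (mdec x y); [subst; contradiction|auto].
  - destruct Hb; [congruence|]. rewrite IHNoDup; auto. lra.
Qed.

Lemma rsum2_point (F : mono -> mono -> R) A B a0 b0 : NoDup A -> NoDup B -> In a0 A -> In b0 B ->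
  (forall a b, In a A -> In b B -> (a <> a0 \/ b <> b0) -> F a b = 0) ->
  rsum (fun a => rsum (fun b => F a b) B) A = F a0 b0.
Proof.
  intros HA HB Ha Hb HF.
  rewrite (rsum_ext _ (fun a => if mdec a0 a then rsum (fun b => F a b) B else 0)).
  2:{ intros a Ha'. destruct (mdec a0 a); auto. apply rsum_zero; intros; apply HF; auto. }
  rewrite (rsum_indicator a0 (fun a => rsum (fun b => F a b) B)); auto.
  rewrite (rsum_ext _ (fun b => if mdec b0 b then F a0 b else 0)).
  2:{ intros b Hb'. destruct (mdec b0 b); subst; auto. }
  apply rsum_indicator; auto.
Qed.

Lemma rsum_extend_zero (g : mono -> R) A A' : NoDup A -> NoDup A' -> incl A A' ->
  (forall a, In a A' -> ~ In a A -> g a = 0) -> rsum g A' = rsum g A.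
Proof.
  intros HA HA' Hinc Hz.
  set (P := fun a => if in_dec mdec a A then true else false).
  rewrite (rsum_filter P), Rplus_comm, rsum_zero, Rplus_0_l.
  - apply rsum_perm, NoDup_Permutation; [apply NoDup_filter; auto|auto|].
    intros x; rewrite filter_In; unfold P; split.
    + intros [_ H2]. destruct (in_dec mdec x A); auto; discriminate.
    + intros Hx. split; auto. destruct (in_dec mdec x A); auto.
  - intros x Hx. apply filter_In in Hx as [H1 H2]. unfold P in H2.
    destruct (in_dec mdec x A); simpl in H2; [discriminate|]. auto.
Qed.

Lemma coef_app p q a : coef (p ++ q) a = coef p a + coef q a.
Proof. unfold coef. apply rsum_app. Qed.

Lemma coef_nil a : coef [] a = 0.
Proof. reflexivity. Qed.

Lemma coef_cons t p a : coef (t :: p) a = (if mdec (fst t) a then snd t else 0) + coef p a.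
Proof. reflexivity. Qed.

Lemma coef_flat_map {A} (g : A -> mpoly) l c : coef (flat_map g l) c = rsum (fun x => coef (g x) c) l.
Proof. unfold coef; apply rsum_flat_map. Qed.

Lemma coef_concat_map {A} (F : A -> mpoly) l a :
  coef (concat (map F l)) a = rsum (fun x => coef (F x) a) l.
Proof. unfold coef. rewrite rsum_concat, rsum_map. auto. Qed.

Lemma coef_pscale c p a : coef (pscale c p) a = c * coef p a.
Proof.
  unfold coef, pscale. rewrite rsum_map, <- rsum_scal. apply rsum_ext; intros t _. simpl.
  unfold mono in *. destruct (list_eq_dec _ _ _); lra.
Qed.

Lemma coef_nz_in p a : coef p a <> 0 -> In a (map fst p).
Proof.
  induction p; simpl; intros H; [unfold coef in H; simpl in H; lra|].
  rewrite coef_cons in H. destruct (mdec (fst a0) a); auto.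
  right. apply IHp. lra.
Qed.

(* A sum over the (possibly repeated) terms of p can be regrouped by
   monomials, over any duplicate-free list containing the support of p.  This
   makes every functional of the form sum_t c_t G(a_t) depend only on the
   coefficients of p. *)
Lemma rsum_terms_on_list (p : mpoly) (G : mono -> R) (A : list mono) : NoDup A ->
  (forall t, In t p -> In (fst t) A) ->
  rsum (fun t => snd t * G (fst t)) p = rsum (fun a => coef p a * G a) A.
Proof.
  intros HA. induction p; simpl; intros Hin.
  - rewrite rsum_zero; auto. intros; rewrite coef_nil; lra.
  - rewrite IHp by auto.
    rewrite (rsum_ext (fun a0 => coef (a :: p) a0 * G a0)
       (fun a0 => (if mdec (fst a) a0 then snd a * G a0 else 0) + coef p a0 * G a0)).
    2:{ intros x _. rewrite coef_cons. destruct (mdec (fst a) x); lra. }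
    rewrite rsum_plus, (rsum_indicator (fst a) (fun a0 => snd a * G a0)); auto.
Qed.

Lemma rsum_terms_coef (p : mpoly) (G : mono -> R) (A : list mono) : NoDup A ->
  (forall a, coef p a <> 0 -> In a A) ->
  rsum (fun t => snd t * G (fst t)) p = rsum (fun a => coef p a * G a) A.
Proof.
  intros HA Hs.
  set (A' := nodup mdec (A ++ map fst p)).
  rewrite (rsum_terms_on_list p G A').
  2: apply NoDup_nodup.
  2:{ intros t Ht. apply nodup_In, in_or_app; right. apply in_map; auto. }
  apply rsum_extend_zero; auto. apply NoDup_nodup.
  - intros x Hx. apply nodup_In, in_or_app; auto.
  - intros a _ Ha. destruct (Req_dec (coef p a) 0) as [E|E]; [rewrite E; lra|].
    exfalso; auto.
Qed.

Definition cover (p : mpoly) : list mono := nodup mdec (map fst p).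

Lemma cover_NoDup p : NoDup (cover p).
Proof. apply NoDup_nodup. Qed.

Lemma cover_supp p a : coef p a <> 0 -> In a (cover p).
Proof. intros H; apply nodup_In, coef_nz_in; auto. Qed.

Definition supp_len (N : nat) (p : mpoly) : Prop := forall a, coef p a <> 0 -> length a = N.

Lemma wf_supp N p : wf N p -> supp_len N p.
Proof.
  intros W a H. apply coef_nz_in in H. apply in_map_iff in H as [t [<- Ht]].
  unfold wf in W. rewrite Forall_forall in W. auto.
Qed.

Lemma mdeg_cons x a : mdeg (x :: a) = (x + mdeg a)%nat.
Proof. reflexivity. Qed.

Lemma mdeg_vadd a b : mdeg (vadd a b) = (mdeg a + mdeg b)%nat.
Proof.
  revert b; induction a; intros b; destruct b; simpl; try reflexivity.
  all: unfold mdeg in *; simpl in *; try lia.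
  rewrite IHa. lia.
Qed.

Lemma vadd_comm a b : vadd a b = vadd b a.
Proof. revert b; induction a; destruct b; simpl; auto. f_equal; auto. lia. Qed.

Lemma vadd_length a b : length a = length b -> length (vadd a b) = length a.
Proof. revert b; induction a; destruct b; simpl; intros; auto; try discriminate. Qed.

Definition delta (a c : mono) : R := if mdec a c then 1 else 0.

Lemma coef_pmul_terms p r c : coef (pmul p r) c =
  rsum (fun t => snd t * rsum (fun s => snd s * delta (vadd (fst t) (fst s)) c) r) p.
Proof.
  unfold coef, pmul. rewrite rsum_flat_map. apply rsum_ext; intros t _.
  rewrite rsum_map, <- rsum_scal. apply rsum_ext; intros s _. simpl.
  unfold delta. destruct (mdec (vadd (fst t) (fst s)) c); lra.
Qed.

Lemma coef_pmul p r c A B : NoDup A -> NoDup B ->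
  (forall a, coef p a <> 0 -> In a A) -> (forall b, coef r b <> 0 -> In b B) ->
  coef (pmul p r) c = rsum (fun a => coef p a * rsum (fun b => coef r b * delta (vadd a b) c) B) A.
Proof.
  intros HA HB Hp Hr. rewrite coef_pmul_terms.
  rewrite (rsum_ext _ (fun t => snd t * (fun a => rsum (fun b => coef r b * delta (vadd a b) c) B) (fst t))).
  - apply (rsum_terms_coef p (fun a => rsum (fun b => coef r b * delta (vadd a b) c) B)); auto.
  - intros t _. f_equal. apply (rsum_terms_coef r (fun b => delta (vadd (fst t) b) c)); auto.
Qed.

Lemma coef_pmul_nz p r c : coef (pmul p r) c <> 0 ->
  exists a b, coef p a <> 0 /\ coef r b <> 0 /\ vadd a b = c.
Proof.
  rewrite (coef_pmul p r c (cover p) (cover r)); try apply cover_NoDup; try apply cover_supp.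
  intros H. apply rsum_nz in H as [a [_ Ha]].
  assert (coef p a <> 0) by (intros E; rewrite E in Ha; lra).
  assert (Hb : rsum (fun b => coef r b * delta (vadd a b) c) (cover r) <> 0)
    by (intros E; rewrite E in Ha; lra).
  apply rsum_nz in Hb as [b [_ Hb]]. exists a, b.
  unfold delta in Hb. destruct (mdec (vadd a b) c); split; auto; split; auto; lra.
Qed.

Lemma coef_pmul_scale_l a p r c : coef (pmul (pscale a p) r) c = a * coef (pmul p r) c.
Proof.
  rewrite !coef_pmul_terms. unfold pscale. rewrite rsum_map, <- rsum_scal.
  apply rsum_ext; intros; simpl; ring.
Qed.

Lemma coef_pmul_scale_r a p r c : coef (pmul p (pscale a r)) c = a * coef (pmul p r) c.
Proof.
  rewrite !coef_pmul_terms, <- rsum_scal. apply rsum_ext; intros t _. unfold pscale. rewrite rsum_map.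
  transitivity (snd t * (a * rsum (fun s => snd s * delta (vadd (fst t) (fst s)) c) r)); [|ring].
  f_equal. rewrite <- rsum_scal. apply rsum_ext; intros; simpl; ring.
Qed.

Lemma pmul_app s s' h : pmul (s ++ s') h = pmul s h ++ pmul s' h.
Proof. unfold pmul. apply flat_map_app. Qed.

Lemma pmul_flat_map {A} (g : A -> mpoly) l h : pmul (flat_map g l) h = flat_map (fun x => pmul (g x) h) l.
Proof. unfold pmul. induction l; simpl; auto. rewrite flat_map_app, IHl; auto. Qed.

Lemma peq_pmul s s' h : peq s s' -> peq (pmul s h) (pmul s' h).
Proof.
  intros E c. rewrite !coef_pmul_terms.
  set (A := nodup mdec (map fst s ++ map fst s')).
  set (G := fun a => rsum (fun s0 => snd s0 * delta (vadd a (fst s0)) c) h).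
  change (rsum (fun t => snd t * G (fst t)) s = rsum (fun t => snd t * G (fst t)) s').
  rewrite (rsum_terms_coef s G A), (rsum_terms_coef s' G A); try apply NoDup_nodup.
  - apply rsum_ext; intros a _. rewrite E; auto.
  - intros a Ha. apply nodup_In, in_or_app; right. apply coef_nz_in; auto.
  - intros a Ha. apply nodup_In, in_or_app; left. apply coef_nz_in; auto.
Qed.

Lemma supp_len_pmul N p r : supp_len N p -> supp_len N r -> supp_len N (pmul p r).
Proof.
  intros Hp Hr c Hc. apply coef_pmul_nz in Hc as [a [b [H1 [H2 <-]]]].
  rewrite vadd_length; auto. rewrite Hp, Hr; auto.
Qed.

(** * Graded lexicographic order on exponent vectors

    Leading terms for this order multiply, which is what rules out
    cancellation of top-degree terms in sums of squares. *)

Fixpoint lexlt (a b : mono) : Prop :=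
  match a, b with
  | x :: a', y :: b' => (x < y)%nat \/ (x = y /\ lexlt a' b')
  | _, _ => False
  end.

Lemma lexlt_irrefl a : ~ lexlt a a.
Proof. induction a; simpl; auto. intros [H|[_ H]]; [lia|auto]. Qed.

Lemma lexlt_trans a b c : lexlt a b -> lexlt b c -> lexlt a c.
Proof.
  revert b c; induction a; destruct b, c; simpl; auto; try tauto.
  intros [H|[E H]] [H'|[E' H']]; subst; try (left; lia). right; split; eauto.
Qed.

Lemma lexlt_tri a b : length a = length b -> lexlt a b \/ a = b \/ lexlt b a.
Proof.
  revert b; induction a; destruct b; simpl; intros; auto; try discriminate.
  destruct (lt_eq_lt_dec a n) as [[H1|H1]|H1].
  - auto.
  - subst. destruct (IHa b) as [H2|[H2|H2]]; auto. subst; auto.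
  - right; right; left; lia.
Qed.

Lemma lexlt_add a b c : length a = length c -> length b = length c ->
  lexlt a b -> lexlt (vadd a c) (vadd b c).
Proof.
  revert b c; induction a; destruct b, c; simpl; intros H H0 H1; auto; try discriminate; try tauto.
  destruct H1 as [H1|[E H1]]; [left; lia|]. subst. right; split; auto.
Qed.

Definition grlt (a b : mono) : Prop := (mdeg a < mdeg b)%nat \/ (mdeg a = mdeg b /\ lexlt a b).
Definition grle (a b : mono) : Prop := grlt a b \/ a = b.

Lemma grlt_irrefl a : ~ grlt a a.
Proof. intros [H|[_ H]]; [lia|]. eapply lexlt_irrefl; eauto. Qed.

Lemma grlt_trans a b c : grlt a b -> grlt b c -> grlt a c.
Proof.
  unfold grlt; intros [H|[E H]] [H'|[E' H']]; try (left; lia).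
  right; split; [lia|]. eapply lexlt_trans; eauto.
Qed.

Lemma grlt_le_trans a b c : grlt a b -> grle b c -> grlt a c.
Proof. intros H [H'|<-]; auto. eapply grlt_trans; eauto. Qed.

Lemma grle_trans a b c : grle a b -> grle b c -> grle a c.
Proof. intros [H|<-] H'; auto. left; eapply grlt_le_trans; eauto. Qed.

Lemma grle_mdeg a m : grle a m -> (mdeg a <= mdeg m)%nat.
Proof. intros [[H|[H _]]|<-]; lia. Qed.

Lemma grlt_tri a b : length a = length b -> grlt a b \/ a = b \/ grlt b a.
Proof.
  intros Hl. unfold grlt. destruct (lt_eq_lt_dec (mdeg a) (mdeg b)) as [[H|H]|H]; auto.
  destruct (lexlt_tri a b Hl) as [H1|[H1|H1]]; auto.
Qed.

Lemma grlt_add a b c : length a = length c -> length b = length c ->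
  grlt a b -> grlt (vadd a c) (vadd b c).
Proof.
  unfold grlt; rewrite !mdeg_vadd. intros H1 H2 [H|[E H]]; [left; lia|right; split; [lia|]].
  apply lexlt_add; auto.
Qed.

Lemma grle_add a b c : length a = length c -> length b = length c ->
  grle a b -> grle (vadd a c) (vadd b c).
Proof. intros H1 H2 [H|<-]; [left; apply grlt_add; auto|right; auto]. Qed.

Lemma grle_add2 a b c d N : length a = N -> length b = N -> length c = N -> length d = N ->
  grle a b -> grle c d -> grle (vadd a c) (vadd b d).
Proof.
  intros. eapply grle_trans. apply grle_add; [| |eauto]; congruence.
  rewrite (vadd_comm b c), (vadd_comm b d). apply grle_add; [congruence|congruence|auto].
Qed.

Lemma grle_sum_eq a b m m' N : length a = N -> length b = N -> length m = N -> length m' = N ->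
  grle a m -> grle b m' -> vadd a b = vadd m m' -> a = m /\ b = m'.
Proof.
  intros La Lb Lm Lm' Ha Hb E.
  destruct Ha as [Ha|Ha]; destruct Hb as [Hb|Hb]; auto; exfalso.
  - assert (H1 : grlt (vadd a b) (vadd m b)) by (apply grlt_add; congruence).
    assert (H2 : grlt (vadd b m) (vadd m' m)) by (apply grlt_add; congruence).
    rewrite (vadd_comm b m), (vadd_comm m' m) in H2.
    apply (grlt_irrefl (vadd a b)). rewrite E at 2. eapply grlt_trans; eauto.
  - rewrite Hb in E. assert (H : grlt (vadd a m') (vadd m m')) by (apply grlt_add; congruence).
    rewrite E in H. eapply grlt_irrefl; eauto.
  - rewrite Ha in E. assert (H : grlt (vadd b m) (vadd m' m)) by (apply grlt_add; congruence).
    rewrite (vadd_comm b m), (vadd_comm m' m), E in H. eapply grlt_irrefl; eauto.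
Qed.

Lemma grle_max (L : list mono) N : L <> [] -> (forall a, In a L -> length a = N) ->
  exists m, In m L /\ forall a, In a L -> grle a m.
Proof.
  induction L as [|x L IH]; intros Hne HL; [congruence|].
  destruct L as [|y L'].
  - exists x. split; [left; auto|]. intros a [<-|[]]; right; auto.
  - destruct IH as [m [Hm Hmax]]; [discriminate|intros; apply HL; right; auto|].
    destruct (grlt_tri x m) as [H|[H|H]].
    + rewrite (HL x), (HL m); simpl; auto.
    + exists m; split; [right; auto|]. intros a [<-|Ha]; [left; auto|auto].
    + exists m; split; [right; auto|]. intros a [<-|Ha]; [right; auto|auto].
    + exists x; split; [left; auto|]. intros a [<-|Ha]; [right; auto|].
      left. eapply grlt_le_trans; [|right; eauto].
      destruct (Hmax a Ha); [eapply grlt_trans; eauto|subst; auto].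
Qed.

Lemma coef_pmul_top p r mp mr N : supp_len N p -> supp_len N r -> length mp = N -> length mr = N ->
  (forall a, coef p a <> 0 -> grle a mp) -> (forall b, coef r b <> 0 -> grle b mr) ->
  coef (pmul p r) (vadd mp mr) = coef p mp * coef r mr.
Proof.
  intros Lp Lr Lmp Lmr Hp Hr.
  destruct (Req_dec (coef p mp) 0) as [Z|Z].
  { rewrite Z, Rmult_0_l. apply NNPP; intros C. apply coef_pmul_nz in C as [a [b [H1 [H2 H3]]]].
    destruct (grle_sum_eq a b mp mr N) as [E1 E2]; auto. subst; auto. }
  destruct (Req_dec (coef r mr) 0) as [Z'|Z'].
  { rewrite Z', Rmult_0_r. apply NNPP; intros C. apply coef_pmul_nz in C as [a [b [H1 [H2 H3]]]].
    destruct (grle_sum_eq a b mp mr N) as [E1 E2]; auto. subst; auto. }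
  rewrite (coef_pmul p r _ (cover p) (cover r)); try apply cover_NoDup; try apply cover_supp.
  rewrite (rsum_ext _ (fun a => rsum (fun b => coef p a * (coef r b * delta (vadd a b) (vadd mp mr))) (cover r))).
  2:{ intros; rewrite rsum_scal; auto. }
  rewrite (rsum2_point _ _ _ mp mr); try apply cover_NoDup; try apply cover_supp; auto.
  - unfold delta. destruct (mdec (vadd mp mr) (vadd mp mr)); [lra|congruence].
  - intros a b Ha Hb Hne.
    destruct (Req_dec (coef p a) 0) as [E|E]; [rewrite E; lra|].
    destruct (Req_dec (coef r b) 0) as [E'|E']; [rewrite E'; lra|].
    unfold delta. destruct (mdec (vadd a b) (vadd mp mr)); [|lra].
    destruct (grle_sum_eq a b mp mr N); auto. destruct Hne; congruence.
Qed.

Definition nz_monos (ps : list mpoly) : list mono :=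
  flat_map (fun q => filter (fun a => if Req_EM_T (coef q a) 0 then false else true) (cover q)) ps.

Lemma nz_monos_In ps a : In a (nz_monos ps) <-> exists q, In q ps /\ coef q a <> 0.
Proof.
  unfold nz_monos. rewrite in_flat_map. split.
  - intros [q [Hq Ha]]. apply filter_In in Ha as [_ Ha].
    destruct (Req_EM_T (coef q a) 0); [discriminate|eauto].
  - intros [q [Hq Ha]]. exists q; split; auto. apply filter_In; split; [apply cover_supp; auto|].
    destruct (Req_EM_T (coef q a) 0); auto.
Qed.

Lemma leading_monomial N ps : Forall (supp_len N) ps -> (exists q a, In q ps /\ coef q a <> 0) ->
  exists m, length m = N /\ (exists q, In q ps /\ coef q m <> 0) /\
    forall q a, In q ps -> coef q a <> 0 -> grle a m.
Proof.
  intros W [q0 [a0 [Hq0 Ha0]]]. rewrite Forall_forall in W.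
  destruct (grle_max (nz_monos ps) N) as [m [Hm Hmax]].
  - intros E. assert (H : In a0 (nz_monos ps)) by (apply nz_monos_In; eauto).
    rewrite E in H; contradiction.
  - intros a Ha. apply nz_monos_In in Ha as [q [Hq Ha]]. eapply W; eauto.
  - exists m. apply nz_monos_In in Hm as [q [Hq Hqm]]. split; [eapply W; eauto|].
    split; eauto. intros q' a Hq' Ha. apply Hmax, nz_monos_In; eauto.
Qed.

(** * Degree bounds for sums of squares *)

Definition sosp (qs : list mpoly) : mpoly := flat_map (fun q => pmul q q) qs.

Lemma sos_supp_len N qs : Forall (wf N) qs -> supp_len N (sosp qs).
Proof.
  intros W c Hc. unfold sosp in Hc. rewrite coef_flat_map in Hc. apply rsum_nz in Hc as [q [Hq Hc]].
  rewrite Forall_forall in W. eapply supp_len_pmul; [| |eauto]; apply wf_supp; auto.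
Qed.

Lemma sos_top N qs : Forall (wf N) qs -> (exists q a, In q qs /\ coef q a <> 0) ->
  exists m, length m = N /\ (forall q a, In q qs -> coef q a <> 0 -> grle a m) /\
    0 < coef (sosp qs) (vadd m m) /\ (forall c, coef (sosp qs) c <> 0 -> grle c (vadd m m)).
Proof.
  intros W Hnz.
  assert (S : Forall (supp_len N) qs) by (eapply Forall_impl; [apply wf_supp|exact W]).
  destruct (leading_monomial N qs S Hnz) as [m [Lm [[q1 [Hq1 Hm1]] Hgm]]].
  rewrite Forall_forall in W. exists m. split; auto. split; auto. split.
  - unfold sosp. rewrite coef_flat_map.
    rewrite (rsum_ext _ (fun q => coef q m * coef q m)).
    2:{ intros q Hq. apply (coef_pmul_top q q m m N); try apply wf_supp; auto; intros; eapply Hgm; eauto. }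
    eapply Rlt_le_trans; [|apply (rsum_term_le (fun q => coef q m * coef q m) qs q1); auto].
    + apply (Rsqr_pos_lt (coef q1 m)); auto.
    + intros; apply Rle_0_sqr.
  - intros c Hc. unfold sosp in Hc. rewrite coef_flat_map in Hc. apply rsum_nz in Hc as [q [Hq Hc]].
    apply coef_pmul_nz in Hc as [a [b [Ha [Hb <-]]]].
    apply (grle_add2 a m b m N); auto; try (eapply Hgm; eauto); eapply (wf_supp N q); eauto.
Qed.

Lemma sos_times_degree N qs s h b0 D : Forall (wf N) qs -> peq s (sosp qs) -> supp_len N h ->
  coef h b0 <> 0 -> deg_le D (pmul s h) ->
  forall q a, In q qs -> coef q a <> 0 -> (2 * mdeg a + mdeg b0 <= D)%nat.
Proof.
  intros W E Lh Hb0 Hdeg q a Hq Ha.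
  destruct (leading_monomial N [h]) as [mh [Lmh [[h' [Hh' Hmh]] Hmax]]].
  { repeat constructor; auto. }
  { exists h, b0; simpl; auto. }
  destruct Hh' as [<-|[]].
  destruct (sos_top N qs W) as [m [Lm [Hgm [Hpos Hsup]]]]; [eauto|].
  assert (Hc : coef (pmul s h) (vadd (vadd m m) mh) <> 0).
  { rewrite (peq_pmul s (sosp qs) h E), (coef_pmul_top _ _ _ _ N); auto.
    - intros C. apply Rmult_integral in C as [C|C]; [lra|auto].
    - apply sos_supp_len; auto.
    - rewrite vadd_length; congruence.
    - intros b Hb. apply (Hmax h); simpl; auto. }
  apply Hdeg in Hc. rewrite !mdeg_vadd in Hc.
  pose proof (grle_mdeg _ _ (Hgm q a Hq Ha)).
  pose proof (grle_mdeg _ _ (Hmax h b0 (or_introl eq_refl) Hb0)). lia.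
Qed.

Lemma sos_degree N qs s D : Forall (wf N) qs -> peq s (sosp qs) -> deg_le D s ->
  forall q a, In q qs -> coef q a <> 0 -> (2 * mdeg a <= D)%nat.
Proof.
  intros W E Hdeg q a Hq Ha.
  destruct (sos_top N qs W) as [m [Lm [Hgm [Hpos Hsup]]]]; [eauto|].
  assert (Hc : coef s (vadd m m) <> 0) by (rewrite E; lra).
  apply Hdeg in Hc. rewrite !mdeg_vadd in Hc.
  pose proof (grle_mdeg _ _ (Hgm q a Hq Ha)). lia.
Qed.

Lemma monos_In N d a : In a (monos N d) <-> length a = N /\ (mdeg a <= d)%nat.
Proof.
  revert d a; induction N; intros d a.
  - simpl. split.
    + intros [<-|[]]; split; simpl; auto; unfold mdeg; simpl; lia.
    + intros [H1 H2]. destruct a; simpl in *; auto; discriminate.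
  - change (monos (S N) d) with (flat_map (fun x => map (cons x) (monos N (d - x))) (seq 0 (S d))).
    rewrite in_flat_map. split.
    + intros [x [Hx Ha]]. apply in_map_iff in Ha as [a' [<- Ha']]. apply IHN in Ha' as [H1 H2].
      apply in_seq in Hx. rewrite mdeg_cons. simpl. split; [auto|lia].
    + intros [H1 H2]. destruct a as [|x a']; simpl in H1; [discriminate|].
      rewrite mdeg_cons in H2. exists x. split; [apply in_seq; lia|].
      apply in_map, IHN. split; lia.
Qed.

Lemma NoDup_monos N d : NoDup (monos N d).
Proof.
  revert d; induction N; intros d; [simpl; constructor; [auto|constructor]|].
  change (monos (S N) d) with (flat_map (fun x => map (cons x) (monos N (d - x))) (seq 0 (S d))).
  generalize (seq_NoDup (S d) 0). generalize (seq 0 (S d)). intros l Hl.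
  induction Hl; simpl; [constructor|].
  apply NoDup_app.
  - apply NoDup_map_NoDup_ForallPairs; auto. intros u v _ _ E; injection E; auto.
  - auto.
  - intros a Ha Hb. apply in_map_iff in Ha as [u [<- _]].
    apply in_flat_map in Hb as [z [Hz Hb]]. apply in_map_iff in Hb as [v [E _]].
    injection E; intros; subst; auto.
Qed.

Lemma Ly_peq y p q : peq p q -> Ly y p = Ly y q.
Proof.
  intros E. unfold Ly.
  set (A := nodup mdec (map fst p ++ map fst q)).
  rewrite (rsum_terms_coef p y A), (rsum_terms_coef q y A); try apply NoDup_nodup.
  - apply rsum_ext; intros a _. rewrite E; auto.
  - intros a Ha. apply nodup_In, in_or_app; right. apply coef_nz_in; auto.
  - intros a Ha. apply nodup_In, in_or_app; left. apply coef_nz_in; auto.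
Qed.

Lemma Ly_app y p q : Ly y (p ++ q) = Ly y p + Ly y q.
Proof. unfold Ly; apply rsum_app. Qed.

Lemma Ly_flat_map {A} y (g : A -> mpoly) l : Ly y (flat_map g l) = rsum (fun x => Ly y (g x)) l.
Proof. unfold Ly; apply rsum_flat_map. Qed.

Lemma Ly_concat {A} y (F : A -> mpoly) l : Ly y (concat (map F l)) = rsum (fun x => Ly y (F x)) l.
Proof. unfold Ly. rewrite rsum_concat, rsum_map. auto. Qed.

Lemma Ly_pmul y p r :
  Ly y (pmul p r) = rsum (fun t => snd t * rsum (fun s => snd s * y (vadd (fst t) (fst s))) r) p.
Proof.
  unfold Ly, pmul. rewrite rsum_flat_map. apply rsum_ext; intros t _.
  rewrite rsum_map, <- rsum_scal. apply rsum_ext; intros s _. simpl. lra.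
Qed.

Lemma Ly_pvar y N i : Ly y (pvar N i) = y (evec N i).
Proof. unfold Ly, pvar. simpl. ring. Qed.

Lemma Ly_pmul_zero y s h : (forall b, coef h b = 0) -> Ly y (pmul s h) = 0.
Proof.
  intros Hz. rewrite Ly_pmul. apply rsum_zero; intros t _.
  rewrite (rsum_terms_coef h (fun b => y (vadd (fst t) b)) []); [simpl; lra|constructor|].
  intros a Ha; exfalso; auto.
Qed.

Definition qform (q : mpoly) (M : mono -> mono -> R) : R :=
  rsum (fun t => snd t * rsum (fun t' => snd t' * M (fst t) (fst t')) q) q.

Lemma qform_matrix q M I : NoDup I -> (forall a, coef q a <> 0 -> In a I) ->
  qform q M = rsum (fun a => rsum (fun b => coef q a * M a b * coef q b) I) I.
Proof.
  intros HI Hs. unfold qform.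
  rewrite (rsum_terms_coef q (fun a => rsum (fun t' => snd t' * M a (fst t')) q) I); auto.
  apply rsum_ext; intros a _.
  rewrite (rsum_terms_coef q (fun b => M a b) I); auto. rewrite <- rsum_scal. apply rsum_ext; intros; lra.
Qed.

Lemma qform_psd q M I : NoDup I -> (forall a, coef q a <> 0 -> In a I) -> psd I M -> 0 <= qform q M.
Proof. intros HI Hs Hp. rewrite (qform_matrix q M I) by auto. apply Hp. Qed.

Lemma locmat_pscale c p y a b : locmat (pscale c p) y a b = c * locmat p y a b.
Proof. unfold locmat, pscale. rewrite rsum_map, <- rsum_scal. apply rsum_ext; intros t _. simpl. lra. Qed.

Lemma locmat_sym h y a b : locmat h y a b = locmat h y b a.
Proof. unfold locmat. rewrite vadd_comm. auto. Qed.

Lemma qform_pscale q c p y : qform q (locmat (pscale c p) y) = c * qform q (locmat p y).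
Proof.
  unfold qform. rewrite <- rsum_scal. apply rsum_ext; intros t _.
  rewrite (rsum_ext _ (fun t' => c * (snd t' * locmat p y (fst t) (fst t')))).
  2:{ intros; rewrite locmat_pscale; lra. }
  rewrite rsum_scal. lra.
Qed.

Lemma Ly_square y q : Ly y (pmul q q) = qform q (momat y).
Proof. rewrite Ly_pmul. reflexivity. Qed.

Lemma Ly_square_times y q h : Ly y (pmul (pmul q q) h) = qform q (locmat h y).
Proof.
  rewrite Ly_pmul. unfold pmul at 1. rewrite rsum_flat_map. apply rsum_ext; intros t _.
  rewrite rsum_map, <- rsum_scal. apply rsum_ext; intros t' _. simpl.
  unfold locmat. rewrite <- !rsum_scal. apply rsum_ext; intros s _. lra.
Qed.

Lemma Ly_sos y qs : Ly y (sosp qs) = rsum (fun q => qform q (momat y)) qs.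
Proof. unfold sosp. rewrite Ly_flat_map. apply rsum_ext; intros q _. apply Ly_square. Qed.

Lemma Ly_sos_times y qs h : Ly y (pmul (sosp qs) h) = rsum (fun q => qform q (locmat h y)) qs.
Proof.
  unfold sosp. rewrite pmul_flat_map, Ly_flat_map. apply rsum_ext; intros q _.
  apply Ly_square_times.
Qed.

Definition qv (I : list mono) (v : mono -> R) : mpoly := map (fun a => (a, v a)) I.

Lemma qform_qv I v M : qform (qv I v) M = rsum (fun a => rsum (fun b => v a * M a b * v b) I) I.
Proof.
  unfold qform, qv. rewrite rsum_map. apply rsum_ext; intros a _. rewrite rsum_map. simpl.
  rewrite <- rsum_scal. apply rsum_ext; intros; lra.
Qed.

Lemma qv_sos N I v : (forall a, In a I -> length a = N) -> is_sos N (pmul (qv I v) (qv I v)).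
Proof.
  intros HI. exists [qv I v]. split.
  - constructor; [|constructor]. unfold wf, qv. apply Forall_forall. intros t Ht.
    apply in_map_iff in Ht as [a [<- Ha]]. simpl; auto.
  - intros a. simpl. rewrite app_nil_r. reflexivity.
Qed.

Lemma qv_supp I v a : coef (qv I v) a <> 0 -> In a I.
Proof.
  intros H. apply coef_nz_in in H. unfold qv in H. rewrite map_map in H. simpl in H.
  rewrite map_id in H. auto.
Qed.

Lemma qv_square_times_degree I v d h e : (forall a, In a I -> (mdeg a <= d)%nat) ->
  (forall b, coef h b <> 0 -> (mdeg b <= e)%nat) ->
  forall c, coef (pmul (pmul (qv I v) (qv I v)) h) c <> 0 -> (mdeg c <= 2 * d + e)%nat.
Proof.
  intros HI Hh c Hc. apply coef_pmul_nz in Hc as [ab [b [Hab [Hb <-]]]].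
  apply coef_pmul_nz in Hab as [a [a' [Ha [Ha' <-]]]].
  apply qv_supp in Ha, Ha'. apply Hh in Hb. rewrite !mdeg_vadd.
  pose proof (HI a Ha). pose proof (HI a' Ha'). lia.
Qed.

Lemma qv_square_degree I v d : (forall a, In a I -> (mdeg a <= d)%nat) ->
  forall c, coef (pmul (qv I v) (qv I v)) c <> 0 -> (mdeg c <= 2 * d)%nat.
Proof.
  intros HI c Hc. apply coef_pmul_nz in Hc as [a [b [Ha [Hb <-]]]].
  apply qv_supp in Ha, Hb. rewrite mdeg_vadd. pose proof (HI a Ha). pose proof (HI b Hb). lia.
Qed.

Lemma fold_max_ge x l : In x l -> (x <= fold_right Nat.max 0 l)%nat.
Proof.
  induction l; simpl; intros H; [contradiction|].
  destruct H as [<-|H]; [lia|]. specialize (IHl H); lia.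
Qed.

Lemma pdeg_ge g a : coef g a <> 0 -> (mdeg a <= pdeg g)%nat.
Proof.
  intros H. apply coef_nz_in in H as H1. apply in_map_iff in H1 as [t [Et Ht]].
  unfold pdeg. apply fold_max_ge, in_map_iff. exists t. split; auto.
  rewrite Et. destruct (Req_EM_T (coef g a) 0); [contradiction|auto].
Qed.

Lemma coef_homog_cons g c a :
  coef (homog g) (c :: a) = if Nat.eq_dec c (pdeg g - mdeg a) then coef g a else 0.
Proof.
  unfold coef, homog. rewrite rsum_map. destruct (Nat.eq_dec c (pdeg g - mdeg a)).
  - apply rsum_ext; intros t _. cbn [fst snd]. unfold mono in *.
    destruct (list_eq_dec Nat.eq_dec ((pdeg g - mdeg (fst t))%nat :: fst t) (c :: a)) as [E|E];
      destruct (list_eq_dec Nat.eq_dec (fst t) a) as [E'|E']; auto.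
    + injection E; intros; exfalso; apply E'; assumption.
    + exfalso; apply E; rewrite E'; subst c; reflexivity.
  - apply rsum_zero; intros t _. cbn [fst snd]. unfold mono in *.
    destruct (list_eq_dec _ _ _) as [E|E]; auto. injection E; intros; subst. congruence.
Qed.

Lemma coef_homog_nil g : coef (homog g) [] = 0.
Proof.
  unfold coef, homog. rewrite rsum_map. apply rsum_zero; intros t _. cbn [fst snd].
  destruct (list_eq_dec _ _ _); [discriminate|auto].
Qed.

Lemma homog_supp g b : coef (homog g) b <> 0 ->
  exists a, b = (pdeg g - mdeg a)%nat :: a /\ coef g a <> 0 /\ mdeg b = pdeg g.
Proof.
  destruct b as [|c a]; [rewrite coef_homog_nil; lra|].
  rewrite coef_homog_cons. destruct (Nat.eq_dec c (pdeg g - mdeg a)); [|lra].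
  intros H. exists a. subst. split; auto. split; auto.
  rewrite mdeg_cons. pose proof (pdeg_ge g a H). lia.
Qed.

Lemma homog_supp_len n g : wf n g -> supp_len (S n) (homog g).
Proof.
  intros W b Hb. apply homog_supp in Hb as [a [-> [Ha _]]]. simpl. f_equal. eapply wf_supp; eauto.
Qed.

Lemma mdeg_spike0 e i N s : (i < s)%nat ->
  mdeg (map (fun j => if Nat.eqb j i then e else 0%nat) (seq s N)) = 0%nat.
Proof.
  revert s; induction N; intros s H; [reflexivity|]. cbn [seq map]. rewrite mdeg_cons, IHN by lia.
  destruct (Nat.eqb_spec s i); lia.
Qed.

Lemma mdeg_spike e i N s : (s <= i < s + N)%nat ->
  mdeg (map (fun j => if Nat.eqb j i then e else 0%nat) (seq s N)) = e.
Proof.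
  revert s; induction N; intros s H; [lia|]. cbn [seq map]. rewrite mdeg_cons.
  destruct (Nat.eqb_spec s i); [rewrite mdeg_spike0 by lia; lia|rewrite IHN by lia; lia].
Qed.

Lemma evec_length N i : length (evec N i) = N.
Proof. unfold evec. rewrite length_map, length_seq. auto. Qed.

Lemma mdeg_evec N i : (i < N)%nat -> mdeg (evec N i) = 1%nat.
Proof. intros; apply mdeg_spike; lia. Qed.

Lemma repeat_mdeg N : mdeg (repeat 0%nat N) = 0%nat.
Proof. induction N; [reflexivity|]. cbn [repeat]. rewrite mdeg_cons; lia. Qed.

Lemma coef_pvar N i a : coef (pvar N i) a = if mdec (evec N i) a then 1 else 0.
Proof. unfold coef, pvar. simpl rsum. cbn [fst snd]. rewrite Rplus_0_r. reflexivity. Qed.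

Lemma coef_pvar_nz N i : coef (pvar N i) (evec N i) <> 0.
Proof. rewrite coef_pvar. destruct (mdec _ _); [lra|congruence]. Qed.

Lemma pvar_supp N i : supp_len N (pvar N i).
Proof.
  intros a. rewrite coef_pvar. destruct (mdec _ _); [|lra]. subst. rewrite evec_length; auto.
Qed.

Lemma pvar_deg N b : coef (pvar N 0) b <> 0 -> (mdeg b <= 1)%nat.
Proof.
  rewrite coef_pvar. destruct (mdec _ _); [|lra]. subst. intros _.
  destruct N; [unfold evec, mdeg; simpl; lia|rewrite mdeg_evec; lia].
Qed.

Definition x0sq (N : nat) : mono := map (fun j => if Nat.eqb j 0 then 2%nat else 0%nat) (seq 0 N).

Lemma mdeg_x0sq n : mdeg (x0sq (S n)) = 2%nat.
Proof. apply mdeg_spike; lia. Qed.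

Lemma nrm1_supp N : supp_len N (nrm1 N).
Proof.
  apply wf_supp. unfold wf, nrm1. apply Forall_app. split.
  - apply Forall_forall. intros t Ht. apply in_map_iff in Ht as [i [<- _]].
    simpl. rewrite length_map, length_seq; auto.
  - constructor; [|constructor]. simpl. unfold zeros. apply repeat_length.
Qed.

Lemma coef_nrm1_x0sq n : coef (nrm1 (S n)) (x0sq (S n)) = 1.
Proof.
  unfold nrm1. rewrite coef_app. unfold coef at 1. rewrite rsum_map. cbn [seq map rsum fst snd].
  unfold x0sq. cbn [seq map]. simpl (Nat.eqb 0 0).
  rewrite rsum_zero.
  - unfold coef, zeros. cbn [repeat rsum fst snd].
    destruct (list_eq_dec Nat.eq_dec (2%nat :: _) (2%nat :: _)) as [_|C]; [|congruence].
    destruct (list_eq_dec Nat.eq_dec (0%nat :: _) (2%nat :: _)) as [C|_]; [discriminate|]. lra.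
  - intros i Hi. apply in_seq in Hi. cbn [fst snd].
    destruct (Nat.eqb_spec 0 i); [lia|].
    destruct (list_eq_dec Nat.eq_dec (0%nat :: _) (2%nat :: _)) as [C|_]; [discriminate|]. auto.
Qed.

Lemma nrm1_deg N b : coef (nrm1 N) b <> 0 -> (mdeg b <= 2)%nat.
Proof.
  intros H. apply coef_nz_in in H. unfold nrm1 in H. rewrite map_app, in_app_iff in H.
  destruct H as [H|[H|[]]].
  - rewrite map_map in H. apply in_map_iff in H as [i [<- Hi]]. simpl. apply in_seq in Hi.
    rewrite mdeg_spike; lia.
  - simpl in H. subst. unfold zeros. rewrite repeat_mdeg. lia.
Qed.

Lemma mnrm1_supp N : supp_len N (pscale (-1) (nrm1 N)).
Proof. intros a Ha. rewrite coef_pscale in Ha. apply nrm1_supp. intros E; rewrite E in Ha; lra. Qed.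

Lemma mnrm1_deg N b : coef (pscale (-1) (nrm1 N)) b <> 0 -> (mdeg b <= 2)%nat.
Proof. intros Ha. rewrite coef_pscale in Ha. apply (nrm1_deg N). intros E; rewrite E in Ha; lra. Qed.

Lemma Gtilde_In n gs h : In h (Gtilde n gs) ->
  (exists g, In g gs /\ h = homog g) \/ h = pvar (S n) 0 \/ h = nrm1 (S n) \/
  h = pscale (-1) (nrm1 (S n)).
Proof.
  unfold Gtilde. rewrite in_app_iff, in_map_iff. intros [[g [<- Hg]]|H]; [left; eauto|right].
  simpl in H. intuition.
Qed.

Lemma Gtilde_supp n gs : Forall (wf n) gs -> forall h, In h (Gtilde n gs) -> supp_len (S n) h.
Proof.
  intros Wg h Hh. apply Gtilde_In in Hh as [[g [Hg Eh]] | [Eh | [Eh | Eh]]]; subst h.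
  - rewrite Forall_forall in Wg. apply homog_supp_len; auto.
  - apply pvar_supp.
  - apply nrm1_supp.
  - apply mnrm1_supp.
Qed.

(* The index sets of the localizing matrices fit the degree bound 2k. *)
Lemma halfceil_of_degree d k m : (2 * m + d <= 2 * k)%nat -> (m <= k - halfceil d)%nat.
Proof.
  unfold halfceil. pose proof (Nat.div_mod (d + 1) 2 ltac:(lia)).
  pose proof (Nat.mod_upper_bound (d + 1) 2 ltac:(lia)). lia.
Qed.

Lemma degree_of_halfceil d k m : (halfceil d <= k)%nat -> (m <= k - halfceil d)%nat ->
  (2 * m + d <= 2 * k)%nat.
Proof.
  unfold halfceil. pose proof (Nat.div_mod (d + 1) 2 ltac:(lia)).
  pose proof (Nat.mod_upper_bound (d + 1) 2 ltac:(lia)). lia.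
Qed.

(* y satisfies the matrix conditions defining Omega_k(G~); Omega_k additionally
   normalises L_y(X_0) = 1 and reads off the point from L_y(X_i). *)
Definition moment_conditions (n k : nat) (gs : list mpoly) (y : mono -> R) : Prop :=
  psd (monos (S n) (k - 1)) (locmat (pvar (S n) 0) y) /\
  (forall a b, In a (monos (S n) (k - 1)) -> In b (monos (S n) (k - 1)) ->
     locmat (nrm1 (S n)) y a b = 0) /\
  psd (monos (S n) k) (momat y) /\
  Forall (fun g => psd (monos (S n) (k - halfceil (pdeg g))) (locmat (homog g) y)) gs.

Lemma psd_ext I M M' : (forall a b, In a I -> In b I -> M a b = M' a b) -> psd I M -> psd I M'.
Proof.
  intros E H v. specialize (H v). erewrite rsum_ext; [exact H|].
  intros a Ha. apply rsum_ext; intros b Hb. rewrite E; auto.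
Qed.

Lemma psd_add I M1 M2 : psd I M1 -> psd I M2 -> psd I (fun a b => M1 a b + M2 a b).
Proof.
  intros H1 H2 v. specialize (H1 v). specialize (H2 v). cbv beta.
  rewrite (rsum_ext _ (fun a => rsum (fun b => v a * M1 a b * v b) I + rsum (fun b => v a * M2 a b * v b) I)).
  - rewrite rsum_plus. lra.
  - intros a _. rewrite <- rsum_plus. apply rsum_ext; intros; ring.
Qed.

Lemma psd_scale I M t : 0 <= t -> psd I M -> psd I (fun a b => t * M a b).
Proof.
  intros Ht H v. specialize (H v). cbv beta.
  rewrite (rsum_ext _ (fun a => t * rsum (fun b => v a * M a b * v b) I)).
  - rewrite rsum_scal. apply Rmult_le_pos; auto.
  - intros a _. rewrite <- rsum_scal. apply rsum_ext; intros; ring.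
Qed.

Lemma psd_zero I : psd I (fun _ _ => 0).
Proof. intros v. apply rsum_nonneg; intros; apply rsum_nonneg; intros; lra. Qed.

Lemma locmat_add h y1 y2 a b :
  locmat h (fun c => y1 c + y2 c) a b = locmat h y1 a b + locmat h y2 a b.
Proof. unfold locmat. rewrite <- rsum_plus. apply rsum_ext; intros; ring. Qed.

Lemma locmat_scale h y t a b : locmat h (fun c => t * y c) a b = t * locmat h y a b.
Proof. unfold locmat. rewrite <- rsum_scal. apply rsum_ext; intros; ring. Qed.

Lemma moment_conditions_add n k gs y1 y2 :
  moment_conditions n k gs y1 -> moment_conditions n k gs y2 ->
  moment_conditions n k gs (fun c => y1 c + y2 c).
Proof.
  intros [A1 [B1 [C1 D1]]] [A2 [B2 [C2 D2]]]. split; [|split; [|split]].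
  - eapply psd_ext; [|apply (psd_add _ _ _ A1 A2)]. intros; simpl; rewrite locmat_add; auto.
  - intros a b Ha Hb. rewrite locmat_add, B1, B2; auto; lra.
  - eapply psd_ext; [|apply (psd_add _ _ _ C1 C2)]. intros; unfold momat; auto.
  - rewrite Forall_forall in *. intros g Hg. eapply psd_ext; [|apply (psd_add _ _ _ (D1 g Hg) (D2 g Hg))].
    intros; simpl; rewrite locmat_add; auto.
Qed.

Lemma moment_conditions_scale n k gs y t : 0 <= t ->
  moment_conditions n k gs y -> moment_conditions n k gs (fun c => t * y c).
Proof.
  intros Ht [A1 [B1 [C1 D1]]]. split; [|split; [|split]].
  - eapply psd_ext; [|apply (psd_scale _ _ _ Ht A1)]. intros; simpl; rewrite locmat_scale; auto.
  - intros a b Ha Hb. rewrite locmat_scale, B1; auto; lra.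
  - eapply psd_ext; [|apply (psd_scale _ _ _ Ht C1)]. intros; unfold momat; auto.
  - rewrite Forall_forall in *. intros g Hg. eapply psd_ext; [|apply (psd_scale _ _ _ Ht (D1 g Hg))].
    intros; simpl; rewrite locmat_scale; auto.
Qed.

Lemma moment_conditions_zero n k gs : moment_conditions n k gs (fun _ => 0).
Proof.
  assert (Z : forall h a b, locmat h (fun _ => 0) a b = 0)
    by (intros; unfold locmat; apply rsum_zero; intros; ring).
  split; [|split; [|split]].
  - eapply psd_ext; [|apply psd_zero]. intros; simpl; rewrite Z; auto.
  - intros; apply Z.
  - eapply psd_ext; [|apply psd_zero]. intros; unfold momat; auto.
  - apply Forall_forall. intros g Hg. eapply psd_ext; [|apply psd_zero]. intros; simpl; rewrite Z; auto.
Qed.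

Lemma generator_localizing_psd n k gs y h : moment_conditions n k gs y ->
  In h (Gtilde n gs) ->
  (forall b, coef h b = 0) \/
  exists d b0, coef h b0 <> 0 /\ psd (monos (S n) d) (locmat h y) /\
    forall m, (2 * m + mdeg b0 <= 2 * k)%nat -> (m <= d)%nat.
Proof.
  intros [Dx [Dn [Dm Dg]]] Hh. rewrite Forall_forall in Dg.
  apply Gtilde_In in Hh as [[g [Hg ->]] | [-> | [-> | ->]]].
  - destruct (classic (exists b0, coef (homog g) b0 <> 0)) as [[b0 Hb0]|Hnz].
    2:{ left. intros b; apply NNPP; intros C; eauto. }
    right. exists (k - halfceil (pdeg g))%nat, b0. repeat split; auto.
    apply homog_supp in Hb0 as [_ [_ [_ ->]]]. intros m Hm. apply halfceil_of_degree; auto.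
  - right. exists (k - 1)%nat, (evec (S n) 0). repeat split; auto using coef_pvar_nz.
    rewrite mdeg_evec by lia. lia.
  - right. exists (k - 1)%nat, (x0sq (S n)). repeat split.
    + rewrite coef_nrm1_x0sq; lra.
    + eapply psd_ext; [|apply psd_zero]. intros a b Ha Hb. cbv beta. rewrite Dn; auto.
    + rewrite mdeg_x0sq. lia.
  - right. exists (k - 1)%nat, (x0sq (S n)). repeat split.
    + rewrite coef_pscale, coef_nrm1_x0sq; lra.
    + eapply psd_ext; [|apply psd_zero]. intros a b Ha Hb. cbv beta.
      rewrite locmat_pscale, Dn; auto. lra.
    + rewrite mdeg_x0sq. lia.
Qed.

Definition mults (ss H : list mpoly) : mpoly :=
  concat (map (fun sh : mpoly * mpoly => pmul (fst sh) (snd sh)) (combine ss H)).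

Lemma sos_nil N : is_sos N [].
Proof. exists []. split; [constructor|]. intros a; reflexivity. Qed.

Lemma deg_le_nil D : deg_le D [].
Proof. intros a Ha. exfalso; apply Ha; reflexivity. Qed.

Lemma mults_nil (H : list mpoly) : mults (map (fun _ => []) H) H = [].
Proof. induction H; simpl; auto. Qed.

Lemma Forall2_mults_nil k (H : list mpoly) :
  Forall2 (fun s h => deg_le (2 * k) (pmul s h)) (map (fun _ => []) H) H.
Proof. induction H; simpl; constructor; auto. apply deg_le_nil. Qed.

Lemma Forall_sos_nil N (H : list mpoly) : Forall (is_sos N) (map (fun _ => []) H).
Proof. induction H; simpl; constructor; auto. apply sos_nil. Qed.

Lemma Qk_sos N k H s : is_sos N s -> deg_le (2 * k) s -> in_Qk N k H s.
Proof.
  intros Hs Hd. exists s, (map (fun _ => []) H). repeat split; auto.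
  - apply Forall_sos_nil.
  - apply Forall2_mults_nil.
  - fold (mults (map (fun _ => []) H) H). rewrite mults_nil, app_nil_r. intros a; reflexivity.
Qed.

Lemma Qk_cons N k h H f : in_Qk N k H f -> in_Qk N k (h :: H) f.
Proof.
  intros [s0 [ss [Hs0 [Hd0 [Hss [H2 Ef]]]]]].
  exists s0, ([] :: ss). repeat split; auto.
  - constructor; auto. apply sos_nil.
  - constructor; auto. apply deg_le_nil.
Qed.

Lemma Qk_generator N k h H s : In h H -> is_sos N s -> deg_le (2 * k) (pmul s h) -> in_Qk N k H (pmul s h).
Proof.
  induction H as [|h' H IH]; simpl; intros Hin Hs Hd; [contradiction|].
  destruct Hin as [<-|Hin]; [|apply Qk_cons; auto].
  exists [], (s :: map (fun _ => []) H). repeat split.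
  - apply sos_nil.
  - apply deg_le_nil.
  - constructor; auto. apply Forall_sos_nil.
  - constructor; auto. apply Forall2_mults_nil.
  - simpl. fold (mults (map (fun _ => []) H) H). rewrite mults_nil, app_nil_r. intros a; reflexivity.
Qed.

Lemma Qk_nil N k H : in_Qk N k H [].
Proof. apply Qk_sos; [apply sos_nil|apply deg_le_nil]. Qed.

(* Q_k(H) is a convex cone.  Two certificates are added multiplier by multiplier. *)
Definition zapp (ss ss' : list mpoly) : list mpoly := map (fun p => fst p ++ snd p) (combine ss ss').

Lemma zapp_cons s s' ss ss' : zapp (s :: ss) (s' :: ss') = (s ++ s') :: zapp ss ss'.
Proof. reflexivity. Qed.

Lemma coef_mults_zapp ss ss' H a : length ss = length H -> length ss' = length H ->
  coef (mults (zapp ss ss') H) a = coef (mults ss H) a + coef (mults ss' H) a.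
Proof.
  unfold mults. revert ss ss'; induction H; intros ss ss' L1 L2;
    destruct ss, ss'; cbn [length] in *; try discriminate.
  - unfold coef; simpl; lra.
  - rewrite zapp_cons. cbn [combine map concat fst snd].
    rewrite !coef_app, pmul_app, coef_app, IHlist by lia. lra.
Qed.

Lemma Forall2_zapp (P : mpoly -> mpoly -> Prop) ss ss' H :
  (forall s s' h, P s h -> P s' h -> P (s ++ s') h) ->
  Forall2 P ss H -> Forall2 P ss' H -> Forall2 P (zapp ss ss') H.
Proof.
  intros HP F1. revert ss'. induction F1; intros ss' F2; inversion F2; subst; [constructor|].
  rewrite zapp_cons. constructor; auto.
Qed.

Lemma Forall_zapp (P : mpoly -> Prop) ss ss' : (forall s s', P s -> P s' -> P (s ++ s')) ->
  Forall P ss -> Forall P ss' -> Forall P (zapp ss ss').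
Proof.
  intros HP F1 F2. unfold zapp. apply Forall_forall. intros x Hx.
  apply in_map_iff in Hx as [[s s'] [<- Hin]]. rewrite Forall_forall in F1, F2. simpl.
  apply HP; [apply F1; eapply in_combine_l|apply F2; eapply in_combine_r]; eauto.
Qed.

Lemma sos_app N s s' : is_sos N s -> is_sos N s' -> is_sos N (s ++ s').
Proof.
  intros [qs [W E]] [qs' [W' E']]. exists (qs ++ qs'). split; [apply Forall_app; auto|].
  intros a. rewrite flat_map_app, !coef_app, E, E'. auto.
Qed.

Lemma deg_le_app D s s' : deg_le D s -> deg_le D s' -> deg_le D (s ++ s').
Proof.
  intros H1 H2 a Ha. rewrite coef_app in Ha.
  destruct (Req_dec (coef s a) 0) as [E|E]; [apply H2|apply H1; auto]. rewrite E in Ha; lra.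
Qed.

Lemma Qk_add N k H f g : in_Qk N k H f -> in_Qk N k H g -> in_Qk N k H (f ++ g).
Proof.
  intros [s0 [ss [S0 [D0 [Fs [F2 E]]]]]] [s0' [ss' [S0' [D0' [Fs' [F2' E']]]]]].
  exists (s0 ++ s0'), (zapp ss ss'). repeat split.
  - apply sos_app; auto.
  - apply deg_le_app; auto.
  - apply Forall_zapp; auto. apply sos_app.
  - apply Forall2_zapp; auto. intros; rewrite pmul_app; apply deg_le_app; auto.
  - intros a. rewrite coef_app, E, E', !coef_app. fold (mults ss H) (mults ss' H) (mults (zapp ss ss') H).
    rewrite coef_mults_zapp; [lra| |]; eapply Forall2_length; eauto.
Qed.

(* Scaling a certificate by t >= 0 scales every multiplier; sqrt t enters the squares. *)
Lemma sos_scale N t s : 0 <= t -> is_sos N s -> is_sos N (pscale t s).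
Proof.
  intros Ht [qs [W E]]. exists (map (pscale (sqrt t)) qs). split.
  - rewrite Forall_forall in *. intros q Hq. apply in_map_iff in Hq as [q' [<- Hq']].
    specialize (W q' Hq'). unfold wf, pscale in *. rewrite Forall_forall in *. intros x Hx.
    apply in_map_iff in Hx as [x' [<- Hx']]. simpl; auto.
  - intros a. rewrite coef_pscale, E, !coef_flat_map, rsum_map, <- rsum_scal.
    apply rsum_ext; intros q _.
    rewrite coef_pmul_scale_l, coef_pmul_scale_r, <- Rmult_assoc, sqrt_sqrt; auto.
Qed.

Lemma coef_mults_scale t ss H a : coef (mults (map (pscale t) ss) H) a = t * coef (mults ss H) a.
Proof.
  unfold mults. revert ss; induction H; intros ss; destruct ss; simpl; try (unfold coef; simpl; lra).
  rewrite !coef_app, coef_pmul_scale_l, IHlist. lra.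
Qed.

Lemma Qk_scale N k H t f : 0 <= t -> in_Qk N k H f -> in_Qk N k H (pscale t f).
Proof.
  intros Ht [s0 [ss [S0 [D0 [Fs [F2 E]]]]]].
  exists (pscale t s0), (map (pscale t) ss). repeat split.
  - apply sos_scale; auto.
  - intros a Ha. rewrite coef_pscale in Ha. apply D0. intros C; rewrite C in Ha; lra.
  - rewrite Forall_forall in *. intros s Hs. apply in_map_iff in Hs as [s' [<- Hs']]. apply sos_scale; auto.
  - clear -F2. induction F2; simpl; constructor; auto. intros a Ha. rewrite coef_pmul_scale_l in Ha.
    apply H. intros C; rewrite C in Ha; lra.
  - intros a. rewrite coef_pscale, E, !coef_app, coef_pscale.
    fold (mults ss H) (mults (map (pscale t) ss) H). rewrite coef_mults_scale. lra.
Qed.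

Lemma Forall2_combine {A B} (P : A -> B -> Prop) l1 l2 x y :
  Forall2 P l1 l2 -> In (x, y) (combine l1 l2) -> P x y /\ In x l1 /\ In y l2.
Proof.
  induction 1; simpl; intros H'; [contradiction|].
  destruct H' as [E|E]; [injection E; intros; subst; auto|].
  destruct (IHForall2 E) as [? [? ?]]; auto.
Qed.

Lemma Qk_supp N k H f : (forall h, In h H -> supp_len N h) -> in_Qk N k H f ->
  forall a, coef f a <> 0 -> In a (monos N (2 * k)).
Proof.
  intros HH [s0 [ss [[qs0 [W0 E0]] [D0 [Fs [F2 E]]]]]] a Ha.
  apply monos_In. rewrite E, coef_app, coef_concat_map in Ha.
  destruct (Req_dec (coef s0 a) 0) as [Z|Z].
  - rewrite Z, Rplus_0_l in Ha. apply rsum_nz in Ha as [[s h] [Hin Hc]]. simpl in Hc.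
    destruct (Forall2_combine _ _ _ _ _ F2 Hin) as [Hd [Hs Hh]]. split; [|apply Hd; auto].
    rewrite Forall_forall in Fs. destruct (Fs s Hs) as [qs [W E1]].
    apply (supp_len_pmul N s h); auto.
    intros b Hb. rewrite E1 in Hb. apply (sos_supp_len N qs W); auto.
  - split; [|apply D0; auto]. rewrite E0 in Z. apply (sos_supp_len N qs0 W0); auto.
Qed.

(** * Duality: admissible sequences are the nonnegative functionals on Q_k *)

Lemma Ly_certificate_nonneg N y qs s h b0 d D : Forall (wf N) qs -> peq s (sosp qs) ->
  supp_len N h -> coef h b0 <> 0 -> deg_le D (pmul s h) ->
  (forall m, (2 * m + mdeg b0 <= D)%nat -> (m <= d)%nat) -> psd (monos N d) (locmat h y) ->
  0 <= Ly y (pmul s h).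
Proof.
  intros Wq Es Lh Hb0 Hdeg Hd Hpsd.
  rewrite (Ly_peq y _ _ (peq_pmul _ _ h Es)), Ly_sos_times.
  apply rsum_nonneg; intros q Hq. apply (qform_psd q _ (monos N d)); auto; [apply NoDup_monos|].
  intros a Ha. apply monos_In. split.
  - rewrite Forall_forall in Wq. eapply wf_supp; eauto.
  - apply Hd. eapply (sos_times_degree N qs s h b0 D); eauto.
Qed.

Lemma riesz_nonneg_Qk n k gs y f : Forall (wf n) gs -> moment_conditions n k gs y ->
  in_Qk (S n) k (Gtilde n gs) f -> 0 <= Ly y f.
Proof.
  intros Wg D [s0 [ss [[qs0 [Wq0 E0]] [Hd0 [Hss [H2 Ef]]]]]].
  rewrite (Ly_peq y _ _ Ef), Ly_app, Ly_concat.
  apply Rplus_le_le_0_compat.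
  - rewrite (Ly_peq y _ _ E0), Ly_sos. apply rsum_nonneg; intros q Hq.
    destruct D as [_ [_ [Dm _]]].
    apply (qform_psd q _ (monos (S n) k)); auto; [apply NoDup_monos|].
    intros a Ha. apply monos_In. split.
    + rewrite Forall_forall in Wq0. eapply wf_supp; eauto.
    + pose proof (sos_degree (S n) qs0 s0 (2 * k) Wq0 E0 Hd0 q a Hq Ha). lia.
  - apply rsum_nonneg. intros [s h] Hsh. simpl.
    destruct (Forall2_combine _ _ _ _ _ H2 Hsh) as [Hdeg [Hs Hh]].
    rewrite Forall_forall in Hss. destruct (Hss s Hs) as [qs [Wq Es]].
    destruct (generator_localizing_psd n k gs y h D Hh) as [Hz|[d [b0 [Hb0 [Hpsd Hd]]]]].
    + rewrite Ly_pmul_zero; auto; lra.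
    + apply (Ly_certificate_nonneg (S n) y qs s h b0 d (2 * k)); auto.
      apply (Gtilde_supp n gs); auto.
Qed.

Lemma localizing_qform_nonneg n k gs y h I v d e : In h (Gtilde n gs) -> supp_len (S n) h ->
  (forall b, coef h b <> 0 -> (mdeg b <= e)%nat) -> (2 * d + e <= 2 * k)%nat ->
  (forall a, In a I -> length a = S n /\ (mdeg a <= d)%nat) ->
  (forall f, in_Qk (S n) k (Gtilde n gs) f -> 0 <= Ly y f) ->
  0 <= qform (qv I v) (locmat h y).
Proof.
  intros Hh Lh Hb Hde HI Hpos. rewrite <- Ly_square_times. apply Hpos, Qk_generator; auto.
  - apply qv_sos. intros a Ha; apply HI; auto.
  - intros c Hc. apply (qv_square_times_degree I v d h e) in Hc; [lia| |auto].
    intros a Ha; apply HI; auto.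
Qed.

(* Since both +-(||X~||^2 - 1) are generators, their localizing forms vanish. *)
Lemma nrm1_qform_zero n k gs y I v : (1 <= k)%nat ->
  (forall a, In a I -> length a = S n /\ (mdeg a <= k - 1)%nat) ->
  (forall f, in_Qk (S n) k (Gtilde n gs) f -> 0 <= Ly y f) ->
  qform (qv I v) (locmat (nrm1 (S n)) y) = 0.
Proof.
  intros Hk HI Hpos.
  assert (GN : In (nrm1 (S n)) (Gtilde n gs)) by (unfold Gtilde; apply in_or_app; right; simpl; auto).
  assert (GM : In (pscale (-1) (nrm1 (S n))) (Gtilde n gs))
    by (unfold Gtilde; apply in_or_app; right; simpl; auto).
  pose proof (localizing_qform_nonneg n k gs y _ I v (k - 1) 2 GN (nrm1_supp _) (nrm1_deg _)
                ltac:(lia) HI Hpos).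
  pose proof (localizing_qform_nonneg n k gs y _ I v (k - 1) 2 GM (mnrm1_supp _) (mnrm1_deg _)
                ltac:(lia) HI Hpos) as Hm.
  rewrite qform_pscale in Hm. lra.
Qed.

Lemma moment_conditions_of_nonneg n k gs y : (1 <= k)%nat -> Forall (wf n) gs ->
  Forall (fun g => (halfceil (pdeg g) <= k)%nat) gs ->
  (forall f, in_Qk (S n) k (Gtilde n gs) f -> 0 <= Ly y f) -> moment_conditions n k gs y.
Proof.
  intros Hk Wg Hhc Hpos.
  assert (GX : In (pvar (S n) 0) (Gtilde n gs)) by (unfold Gtilde; apply in_or_app; right; simpl; auto).
  assert (Im : forall d a, In a (monos (S n) d) -> length a = S n /\ (mdeg a <= d)%nat)
    by (intros; apply monos_In; auto).
  split; [|split; [|split]].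
  - intros v. rewrite <- qform_qv.
    apply (localizing_qform_nonneg n k gs y _ _ v (k - 1) 1 GX (pvar_supp _ _) (pvar_deg _)); auto. lia.
  - intros a b Ha Hb.
    pose proof (nrm1_qform_zero n k gs y [a] (fun _ => 1) Hk ltac:(intros c [<-|[]]; auto) Hpos) as E1.
    pose proof (nrm1_qform_zero n k gs y [b] (fun _ => 1) Hk ltac:(intros c [<-|[]]; auto) Hpos) as E2.
    pose proof (nrm1_qform_zero n k gs y [a; b] (fun _ => 1) Hk
                  ltac:(intros c [<-|[<-|[]]]; auto) Hpos) as E3.
    rewrite qform_qv in E1, E2, E3. simpl in E1, E2, E3.
    rewrite (locmat_sym _ _ b a) in E3. lra.
  - intros v. rewrite <- qform_qv, <- Ly_square. apply Hpos, Qk_sos.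
    + apply qv_sos. intros a Ha; apply (Im k); auto.
    + intros c Hc. apply (qv_square_degree (monos (S n) k) v k) in Hc; auto.
      intros a Ha; apply (Im k); auto.
  - rewrite Forall_forall in Wg, Hhc |- *. intros g Hg v. rewrite <- qform_qv.
    assert (Gg : In (homog g) (Gtilde n gs)) by (unfold Gtilde; apply in_or_app; left; apply in_map; auto).
    apply (localizing_qform_nonneg n k gs y _ _ v (k - halfceil (pdeg g)) (pdeg g) Gg
             (homog_supp_len n g (Wg g Hg))); auto.
    + intros b Hb. apply homog_supp in Hb as [? [_ [_ ->]]]. lia.
    + apply degree_of_halfceil; auto.
Qed.

(** * Separation from a convex cone in R^I *)

Definition ip {T} (I : list T) (u v : T -> R) := rsum (fun i => u i * v i) I.
Definition nsq {T} (I : list T) (u : T -> R) := ip I u u.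

Lemma nsq_nonneg {T} (I : list T) u : 0 <= nsq I u.
Proof. apply rsum_nonneg; intros; nra. Qed.

Lemma sq_le_nsq {T} (I : list T) u a : In a I -> u a * u a <= nsq I u.
Proof. intros Ha. apply (rsum_term_le (fun i => u i * u i)); auto. intros; apply Rle_0_sqr. Qed.

Lemma CV_const c : Un_cv (fun _ : nat => c) c.
Proof. intros eps H. exists 0%nat. intros. unfold R_dist. rewrite Rminus_diag, Rabs_R0. auto. Qed.

Lemma CV_ext (u v : nat -> R) l : (forall j, u j = v j) -> Un_cv u l -> Un_cv v l.
Proof. intros E H eps He. destruct (H eps He) as [N HN]. exists N. intros j Hj. rewrite <- E. auto. Qed.

Lemma rsum_cv {T} (l : list T) (F : nat -> T -> R) (L : T -> R) :
  (forall a, In a l -> Un_cv (fun j => F j a) (L a)) -> Un_cv (fun j => rsum (F j) l) (rsum L l).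
Proof. induction l; simpl; intros H; [apply CV_const|apply CV_plus; auto]. Qed.

Lemma sq_lt_abs x e : 0 < e -> x * x < e * e -> Rabs x < e.
Proof. intros He H. unfold Rabs. destruct (Rcase_abs x); nra. Qed.

Lemma inv_S_le N j : (0 < N)%nat -> (N <= j)%nat -> / INR (S j) <= / INR N.
Proof. intros H1 H2. apply Rinv_le_contravar; [apply lt_0_INR; auto|apply le_INR; lia]. Qed.

Lemma inv_S_pos j : 0 < / INR (S j).
Proof. apply Rinv_0_lt_compat, lt_0_INR; lia. Qed.

Lemma cv_of_sq_bound (u : nat -> R) L : (forall j, (u j - L) * (u j - L) <= / INR (S j)) -> Un_cv u L.
Proof.
  intros H eps Heps.
  destruct (archimed_cor1 (eps * eps)) as [N [HN HN0]]; [nra|].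
  exists N. intros j Hj. unfold R_dist. apply sq_lt_abs; auto.
  pose proof (H j). pose proof (inv_S_le N j HN0 ltac:(lia)).
  set (a1 := / INR (S j)) in *. set (b := / INR N) in *. lra.
Qed.

Lemma choose_seq {A X} (P : A -> X -> Prop) : (forall j, exists x, P j x) -> exists xs, forall j, P j (xs j).
Proof.
  intros H. exists (fun j => proj1_sig (constructive_indefinite_description _ (H j))).
  intros j. exact (proj2_sig (constructive_indefinite_description _ (H j))).
Qed.

Section ConeSeparation.

Variable T : Type.
Variable I : list T.
Variable W : (T -> R) -> Prop.
Variable p : T -> R.
Hypothesis W_add : forall u v, W u -> W v -> W (fun i => u i + v i).
Hypothesis W_scale : forall t u, 0 <= t -> W u -> W (fun i => t * u i).
Hypothesis W_zero : W (fun _ => 0).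

Definition in_clW (u : T -> R) : Prop :=
  exists ws : nat -> T -> R, (forall j, W (ws j)) /\ forall a, In a I -> Un_cv (fun j => ws j a) (u a).

Lemma clW_of_W w : W w -> in_clW w.
Proof. intros Hw. exists (fun _ => w). split; auto. intros; apply CV_const. Qed.

Lemma clW_combine s t u v : 0 <= s -> 0 <= t -> in_clW u -> in_clW v ->
  in_clW (fun i => s * u i + t * v i).
Proof.
  intros Hs Ht [us [Wu Cu]] [vs [Wv Cv]].
  exists (fun j i => s * us j i + t * vs j i). split.
  - intros j. apply (W_add (fun i => s * us j i) (fun i => t * vs j i)); apply W_scale; auto.
  - intros a Ha. apply CV_plus; apply CV_mult; auto; apply CV_const.
Qed.

Lemma clW_dist_lower d2 u : (forall w, W w -> d2 <= nsq I (fun i => p i - w i)) ->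
  in_clW u -> d2 <= nsq I (fun i => p i - u i).
Proof.
  intros Hlow [ws [Ww Cw]].
  apply (@Rle_cv_lim (fun _ => d2) (fun j => nsq I (fun i => p i - ws j i))); auto.
  - apply CV_const.
  - apply rsum_cv. intros a Ha. apply CV_mult; apply CV_minus; auto; apply CV_const.
Qed.

Lemma dist_inf_exists : exists d2, (forall w, W w -> d2 <= nsq I (fun i => p i - w i)) /\
  forall eps, 0 < eps -> exists w, W w /\ nsq I (fun i => p i - w i) < d2 + eps.
Proof.
  set (E := fun r => exists w, W w /\ r = - nsq I (fun i => p i - w i)).
  assert (HE : bound E).
  { exists 0. intros r [w [_ ->]]. pose proof (nsq_nonneg I (fun i => p i - w i)). lra. }
  destruct (completeness E HE) as [m [Hub Hlub]]; [eexists; exists (fun _ => 0); split; eauto|].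
  exists (- m). split.
  - intros w Hw. assert (E (- nsq I (fun i => p i - w i))) by (exists w; auto). apply Hub in H. lra.
  - intros eps Heps. apply NNPP; intros C.
    assert (is_upper_bound E (m - eps)).
    { intros r [w [Hw ->]]. apply Rnot_lt_le. intros C'. apply C. exists w. split; auto. lra. }
    apply Hlub in H. lra.
Qed.

(* A nearest point of the closure: minimizing sequences are Cauchy by the
   parallelogram identity, and R^I is complete. *)
Lemma nearest_point d2 : (forall w, W w -> d2 <= nsq I (fun i => p i - w i)) ->
  (forall eps, 0 < eps -> exists w, W w /\ nsq I (fun i => p i - w i) < d2 + eps) ->
  exists q, in_clW q /\ nsq I (fun i => p i - q i) <= d2.
Proof.
  intros Hlow Happ.
  destruct (choose_seq (fun j w => W w /\ nsq I (fun i => p i - w i) < d2 + / INR (S j))) as [ws Hws].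
  { intros j. apply Happ, inv_S_pos. }
  assert (Hpar : forall i j, nsq I (fun a => ws i a - ws j a) <= 2 * / INR (S i) + 2 * / INR (S j)).
  { intros i j. destruct (Hws i) as [Wi Ni]. destruct (Hws j) as [Wj Nj].
    pose proof (Hlow _ (W_add _ _ (W_scale (/ 2) _ ltac:(lra) Wi) (W_scale (/ 2) _ ltac:(lra) Wj))).
    assert (Id : nsq I (fun a => ws i a - ws j a) = 2 * nsq I (fun a => p a - ws i a)
       + 2 * nsq I (fun a => p a - ws j a) - 4 * nsq I (fun a => p a - (/ 2 * ws i a + / 2 * ws j a))).
    { unfold nsq, ip. rewrite <- !rsum_scal, <- rsum_plus, <- rsum_minus. apply rsum_ext; intros; field. }
    set (a1 := / INR (S i)) in *. set (a2 := / INR (S j)) in *. lra. }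
  assert (Hcau : forall a, In a I -> Cauchy_crit (fun j => ws j a)).
  { intros a Ha eps Heps.
    destruct (archimed_cor1 (eps * eps / 4)) as [N [HN HN0]]; [nra|].
    exists N. intros i j Hi Hj. unfold R_dist. apply sq_lt_abs; auto.
    pose proof (Hpar i j). pose proof (sq_le_nsq I (fun a => ws i a - ws j a) a Ha).
    pose proof (inv_S_le N i HN0 ltac:(lia)). pose proof (inv_S_le N j HN0 ltac:(lia)).
    set (a1 := / INR (S i)) in *. set (a2 := / INR (S j)) in *. set (b := / INR N) in *. lra. }
  destruct (choose_seq (fun (a : T) l => In a I -> Un_cv (fun j => ws j a) l)) as [q Hq].
  { intros a. destruct (classic (In a I)) as [Ha|Ha].
    - destruct (R_complete _ (Hcau a Ha)) as [l Hl]. exists l; auto.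
    - exists 0; intros; contradiction. }
  exists q. split; [exists ws; split; [apply Hws|auto]|].
  apply Rnot_lt_le; intros C. set (L := nsq I (fun a => p a - q a)) in *.
  assert (Hc : Un_cv (fun j => nsq I (fun a => p a - ws j a)) L).
  { apply rsum_cv. intros a Ha. apply CV_mult; apply CV_minus; try apply CV_const; auto. }
  destruct (Hc ((L - d2) / 2)) as [N1 HN1]; [lra|].
  destruct (archimed_cor1 ((L - d2) / 2)) as [N2 [HN2 HN20]]; [lra|].
  specialize (HN1 (N1 + N2)%nat ltac:(lia)). unfold R_dist in HN1.
  destruct (Hws (N1 + N2)%nat) as [_ Hb].
  pose proof (inv_S_le N2 (N1 + N2) HN20 ltac:(lia)).
  apply Rabs_def2 in HN1 as [HA HB].
  set (a1 := / INR (S (N1 + N2))) in *. set (b := / INR N2) in *. lra.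
Qed.

Lemma nearest_point_angle d2 q u : (forall w, W w -> d2 <= nsq I (fun i => p i - w i)) ->
  in_clW q -> nsq I (fun i => p i - q i) <= d2 -> in_clW u ->
  ip I (fun a => p a - q a) (fun a => u a - q a) <= 0.
Proof.
  intros Hlow Hq Hmin Hu.
  set (X := ip I (fun a => p a - q a) (fun a => u a - q a)).
  set (Y := nsq I (fun a => u a - q a)).
  assert (HY : 0 <= Y) by apply nsq_nonneg.
  assert (Hexp : forall t, nsq I (fun a => p a - ((1 - t) * q a + t * u a)) =
                           nsq I (fun a => p a - q a) - 2 * t * X + t * t * Y).
  { intros t. unfold X, Y, nsq, ip. rewrite <- rsum_scal, <- (rsum_scal (t * t)), <- rsum_minus, <- rsum_plus.
    apply rsum_ext; intros; ring. }
  apply Rnot_lt_le; intros HX.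
  set (t := X / (X + Y)).
  assert (Ht1 : t * (X + Y) = X) by (unfold t; field; lra).
  assert (Ht0 : 0 < t) by (unfold t; apply Rdiv_lt_0_compat; lra).
  assert (t <= 1) by nra.
  pose proof (clW_dist_lower d2 _ Hlow (clW_combine (1 - t) t q u ltac:(lra) ltac:(lra) Hq Hu)) as HK.
  cbv beta in HK. rewrite Hexp in HK. nra.
Qed.

Theorem cone_separation (dl : R) : 0 < dl ->
  (forall w, W w -> dl <= nsq I (fun i => p i - w i)) ->
  exists c, ip I c p < 0 /\ forall w, W w -> 0 <= ip I c w.
Proof.
  intros Hdl Hfar.
  destruct dist_inf_exists as [d2 [Hlow Happ]].
  destruct (nearest_point d2 Hlow Happ) as [q [Hq Hmin]].
  assert (Hd : dl <= d2).
  { apply Rnot_lt_le; intros C. destruct (Happ (dl - d2)) as [w [Hw Hw']]; [lra|].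
    pose proof (Hfar w Hw). lra. }
  pose proof (clW_dist_lower d2 q Hlow Hq) as Hge.
  assert (Hperp : ip I (fun a => p a - q a) q = 0).
  { pose proof (nearest_point_angle d2 q _ Hlow Hq Hmin (clW_combine 2 0 q q ltac:(lra) ltac:(lra) Hq Hq)).
    pose proof (nearest_point_angle d2 q _ Hlow Hq Hmin (clW_of_W _ W_zero)).
    unfold ip in *.
    rewrite (rsum_ext _ (fun i => (p i - q i) * q i)) in H by (intros; ring).
    rewrite (rsum_ext _ (fun i => -1 * ((p i - q i) * q i)) ), rsum_scal in H0 by (intros; ring).
    lra. }
  exists (fun a => q a - p a). split.
  - assert (ip I (fun a => q a - p a) p = - nsq I (fun a => p a - q a) - ip I (fun a => p a - q a) q).
    { unfold nsq, ip.
      rewrite (rsum_ext _ (fun i => -1 * ((p i - q i) * (p i - q i)) - (p i - q i) * q i)) by (intros; ring).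
      rewrite rsum_minus, rsum_scal. ring. }
    lra.
  - intros w Hw. pose proof (nearest_point_angle d2 q w Hlow Hq Hmin (clW_of_W w Hw)).
    assert (ip I (fun a => q a - p a) w =
            - ip I (fun a => p a - q a) (fun a => w a - q a) - ip I (fun a => p a - q a) q).
    { unfold ip.
      rewrite (rsum_ext _ (fun i => -1 * ((p i - q i) * (w i - q i)) - (p i - q i) * q i)) by (intros; ring).
      rewrite rsum_minus, rsum_scal. ring. }
    lra.
Qed.

End ConeSeparation.

Definition EV (N : nat) : list mono := map (evec N) (seq 0 N).

Lemma nth_map_seq {A} (f : nat -> A) N s j d : (j < N)%nat -> nth j (map f (seq s N)) d = f (s + j)%nat.
Proof.
  revert s j; induction N; intros s j H; [lia|]. simpl. destruct j; [f_equal; lia|].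
  rewrite IHN by lia. f_equal; lia.
Qed.

Lemma evec_inj N i j : (i < N)%nat -> (j < N)%nat -> evec N i = evec N j -> i = j.
Proof.
  intros Hi Hj E. assert (H : nth i (evec N i) 0%nat = nth i (evec N j) 0%nat) by (rewrite E; auto).
  unfold evec in H. rewrite !nth_map_seq in H by auto. simpl in H.
  rewrite Nat.eqb_refl in H. destruct (Nat.eqb_spec i j); auto. discriminate.
Qed.

Lemma EV_NoDup N : NoDup (EV N).
Proof.
  unfold EV. apply NoDup_map_NoDup_ForallPairs; [|apply seq_NoDup].
  intros i j Hi Hj. apply in_seq in Hi, Hj. apply evec_inj; lia.
Qed.

Lemma mdeg0_repeat a : mdeg a = 0%nat -> a = repeat 0%nat (length a).
Proof. induction a; auto. rewrite mdeg_cons. intros H. simpl. rewrite IHa at 1 by lia. f_equal. lia. Qed.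

Lemma spike_before i s N : (i < s)%nat ->
  map (fun j => if Nat.eqb j i then 1%nat else 0%nat) (seq s N) = repeat 0%nat N.
Proof.
  revert s; induction N; intros s H; simpl; auto. destruct (Nat.eqb_spec s i); [lia|]. f_equal. apply IHN. lia.
Qed.

Lemma mdeg1_spike a s : mdeg a = 1%nat -> exists i, (s <= i < s + length a)%nat /\
  a = map (fun j => if Nat.eqb j i then 1%nat else 0%nat) (seq s (length a)).
Proof.
  revert s; induction a as [|x a IH]; intros s H; [unfold mdeg in H; simpl in H; lia|].
  rewrite mdeg_cons in H. destruct x as [|[|x]].
  - destruct (IH (S s)) as [i [Hi E]]; [lia|]. exists i. simpl. split; [lia|].
    destruct (Nat.eqb_spec s i); [lia|]. f_equal. auto.
  - exists s. simpl. split; [lia|]. rewrite Nat.eqb_refl. f_equal.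
    rewrite spike_before by lia. apply mdeg0_repeat. lia.
  - lia.
Qed.

Lemma linform_supp N l : is_linform N l -> forall a, coef l a <> 0 -> In a (EV N).
Proof.
  intros H a Ha. destruct (H a Ha) as [HL Hd].
  destruct (mdeg1_spike a 0 Hd) as [i [Hi E]]. unfold EV. apply in_map_iff. exists i.
  split; [unfold evec; rewrite E, HL; auto|apply in_seq; lia].
Qed.

Lemma linform_sum N l G : is_linform N l ->
  rsum (fun t => snd t * G (fst t)) l = rsum (fun i => coef l (evec N i) * G (evec N i)) (seq 0 N).
Proof.
  intros H. rewrite (rsum_terms_coef l G (EV N)); [|apply EV_NoDup|apply linform_supp; auto].
  unfold EV. rewrite rsum_map. auto.
Qed.

Lemma meval_spike_before v s i : (i < s)%nat ->
  meval (map (fun j => if Nat.eqb j i then 1%nat else 0%nat) (seq s (length v))) v = 1.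
Proof.
  revert s; induction v; intros s H; simpl; auto. destruct (Nat.eqb_spec s i); [lia|].
  rewrite IHv by lia. simpl. lra.
Qed.

Lemma meval_spike v s i : (s <= i < s + length v)%nat ->
  meval (map (fun j => if Nat.eqb j i then 1%nat else 0%nat) (seq s (length v))) v = nth (i - s) v 0.
Proof.
  revert s; induction v; intros s H; simpl in *; [lia|]. destruct (Nat.eqb_spec s i).
  - subst. rewrite meval_spike_before by lia. rewrite Nat.sub_diag. simpl. lra.
  - rewrite IHv by lia. simpl. replace (i - s)%nat with (S (i - S s)) by lia. simpl. lra.
Qed.

Lemma meval_evec v i : (i < length v)%nat -> meval (evec (length v) i) v = nth i v 0.
Proof. intros H. unfold evec. rewrite meval_spike by lia. f_equal; lia. Qed.

Definition linc (N : nat) (c : nat -> R) : mpoly := map (fun i => (evec N i, c i)) (seq 0 N).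

Lemma linc_linform N c : is_linform N (linc N c).
Proof.
  intros a Ha. apply coef_nz_in in Ha. unfold linc in Ha. rewrite map_map in Ha.
  apply in_map_iff in Ha as [i [<- Hi]]. apply in_seq in Hi.
  simpl. split; [apply evec_length|apply mdeg_evec; lia].
Qed.

Lemma rsum_linc N c G : rsum (fun t => snd t * G (fst t)) (linc N c) =
  rsum (fun i => c i * G (evec N i)) (seq 0 N).
Proof. unfold linc. rewrite rsum_map. auto. Qed.

Lemma linear_eval_at x c :
  rsum (fun i => c i * meval (evec (S (length x)) i) (1 :: x)) (seq 0 (S (length x))) =
  rsum (fun i => c i * nth i (1 :: x) 0) (seq 0 (S (length x))).
Proof.
  apply rsum_ext. intros i Hi. apply in_seq in Hi. f_equal.
  change (S (length x)) with (length (1 :: x)). apply meval_evec. simpl; lia.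
Qed.

Lemma rsum_combine x z : length x = length z ->
  rsum (fun p => (fst p - snd p) ^ 2) (combine x z) =
  rsum (fun i => (nth i x 0 - nth i z 0) ^ 2) (seq 0 (length x)).
Proof.
  revert z; induction x; intros z H; destruct z; simpl in *; try discriminate; auto.
  rewrite IHx by lia. rewrite rsum_seq_S. auto.
Qed.

Lemma coord_le_dist x z i : length x = length z -> (i < length x)%nat ->
  Rabs (nth i x 0 - nth i z 0) <= Defs.dist x z.
Proof.
  intros Hl Hi. unfold Defs.dist. rewrite rsum_combine by auto.
  rewrite <- sqrt_Rsqr_abs. apply sqrt_le_1_alt. rewrite Rsqr_pow2.
  apply (rsum_term_le (fun i0 => (nth i0 x 0 - nth i0 z 0) ^ 2)); [intros; apply pow2_ge_0|apply in_seq; lia].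
Qed.

Lemma affine_lipschitz (c : nat -> R) x z : length z = length x ->
  rsum (fun i => c i * nth i (1 :: z) 0) (seq 0 (S (length x))) -
  rsum (fun i => c i * nth i (1 :: x) 0) (seq 0 (S (length x))) <=
  rsum (fun i => Rabs (c i)) (seq 0 (S (length x))) * Defs.dist x z.
Proof.
  intros Lz. rewrite <- rsum_minus.
  eapply Rle_trans; [apply Rle_abs|]. eapply Rle_trans; [apply rsum_abs|].
  rewrite <- rsum_scalr. apply rsum_le. intros i Hin. apply in_seq in Hin.
  rewrite <- Rmult_minus_distr_l, Rabs_mult. apply Rmult_le_compat_l; [apply Rabs_pos|].
  destruct i as [|i]; simpl.
  - rewrite Rminus_diag, Rabs_R0. unfold Defs.dist. apply sqrt_pos.
  - rewrite Rabs_minus_sym. apply coord_le_dist; lia.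
Qed.

(** * The closure of Omega_k is contained in TH_k *)

Lemma Omega_linform n k gs l z : is_linform (S n) l -> in_Omega n k gs z ->
  exists y, moment_conditions n k gs y /\
    Ly y l = rsum (fun i => coef l (evec (S n) i) * nth i (1 :: z) 0) (seq 0 (S n)).
Proof.
  intros Hl [Lz [y [H0 [Hi [D1 [D2 [D3 D4]]]]]]]. exists y. split; [repeat split; auto|].
  unfold Ly. rewrite (linform_sum (S n) l y Hl). apply rsum_ext. intros i Hin. apply in_seq in Hin.
  f_equal. destruct i as [|i].
  - rewrite <- H0, Ly_pvar. auto.
  - simpl. rewrite <- Hi by lia. rewrite Ly_pvar. auto.
Qed.

(* A negative value l(1,x) would persist near x, hence at some point of Omega_k. *)
Lemma closure_Omega_sub_TH n k gs x : Forall (wf n) gs -> length x = n ->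
  in_closure n (in_Omega n k gs) x -> in_TH n k gs x.
Proof.
  intros Wg Lx [_ Hcl]. split; auto. intros l Hl Hlin. subst n.
  set (c := fun i => coef l (evec (S (length x)) i)).
  set (F := fun v => rsum (fun i => c i * nth i (1 :: v) 0) (seq 0 (S (length x)))).
  set (C := rsum (fun i => Rabs (c i)) (seq 0 (S (length x)))).
  assert (HC : 0 <= C) by (apply rsum_nonneg; intros; apply Rabs_pos).
  unfold peval. rewrite (linform_sum _ l (fun a => meval a (1 :: x)) Hlin), linear_eval_at.
  change (0 <= F x). apply Rnot_lt_le. intros Hneg.
  destruct (Hcl (- F x / (C + 1))) as [z [Hz [Lz Hd]]]; [apply Rdiv_lt_0_compat; lra|].
  destruct (Omega_linform _ k gs l z Hlin Hz) as [y [Dy Ey]].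
  pose proof (riesz_nonneg_Qk _ k gs y l Wg Dy Hl) as Hp. rewrite Ey in Hp. change (0 <= F z) in Hp.
  pose proof (affine_lipschitz c x z Lz) as Hlip. change (F z - F x <= C * Defs.dist x z) in Hlip.
  assert (C * Defs.dist x z <= C * (- F x / (C + 1))) by (apply Rmult_le_compat_l; lra).
  assert (C * (- F x / (C + 1)) < - F x).
  { apply (Rmult_lt_reg_r (C + 1)); [lra|]. unfold Rdiv.
    rewrite Rmult_assoc, (Rmult_assoc (- F x)), Rinv_l by lra. nra. }
  lra.
Qed.

(** * TH_k is contained in the closure of Omega_k *)

Lemma Qk_positive_distance N k H l : (forall h, In h H -> supp_len N h) -> Qk_closed N k H ->
  (forall a, coef l a <> 0 -> In a (monos N (2 * k))) -> ~ in_Qk N k H l ->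
  exists dl, 0 < dl /\ forall f, in_Qk N k H f ->
    dl <= nsq (monos N (2 * k)) (fun a => coef l a - coef f a).
Proof.
  intros HH Hcl Hl Hnot. apply NNPP. intros C. apply Hnot.
  destruct (choose_seq (fun j f => in_Qk N k H f /\
      nsq (monos N (2 * k)) (fun a => coef l a - coef f a) < / INR (S j))) as [fs Hfs].
  { intros j. apply NNPP. intros C'. apply C. exists (/ INR (S j)). split; [apply inv_S_pos|].
    intros f Hf. apply Rnot_lt_le. intros C''. apply C'. eauto. }
  apply (Hcl fs l); [intros j; apply Hfs|]. intros a.
  destruct (classic (In a (monos N (2 * k)))) as [Ha|Ha].
  - apply cv_of_sq_bound. intros j. destruct (Hfs j) as [_ Hj].
    pose proof (sq_le_nsq _ (fun a => coef l a - coef (fs j) a) a Ha). lra.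
  - assert (E1 : coef l a = 0) by (apply NNPP; intros C1; auto).
    assert (E2 : forall j, coef (fs j) a = 0).
    { intros j. apply NNPP; intros C1. apply Ha. apply (Qk_supp N k H (fs j)); auto. apply Hfs. }
    rewrite E1. apply (CV_ext (fun _ => 0)); [intros; auto|apply CV_const].
Qed.

Lemma Qk_of_dual_nonneg n k gs l : (1 <= k)%nat -> Forall (wf n) gs ->
  Forall (fun g => (halfceil (pdeg g) <= k)%nat) gs -> Qk_closed (S n) k (Gtilde n gs) ->
  (forall a, coef l a <> 0 -> In a (monos (S n) (2 * k))) ->
  (forall y, moment_conditions n k gs y -> 0 <= Ly y l) -> in_Qk (S n) k (Gtilde n gs) l.
Proof.
  intros Hk Wg Hhc Hcl Hl Hdual. apply NNPP. intros Hnot.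
  set (IM := monos (S n) (2 * k)).
  assert (HLy : forall f, (forall a, coef f a <> 0 -> In a IM) -> forall y, Ly y f = ip IM y (fun a => coef f a)).
  { intros f Hs y. unfold Ly, ip. rewrite (rsum_terms_coef f y IM); [|apply NoDup_monos|auto].
    apply rsum_ext; intros; ring. }
  assert (HQ : forall f, in_Qk (S n) k (Gtilde n gs) f -> forall a, coef f a <> 0 -> In a IM)
    by (intros f Hf; apply (Qk_supp _ k (Gtilde n gs) f); auto; apply Gtilde_supp; auto).
  destruct (Qk_positive_distance (S n) k _ l (Gtilde_supp n gs Wg) Hcl Hl Hnot) as [dl [Hdl Hfar]].
  set (Wq := fun v : mono -> R => exists f, in_Qk (S n) k (Gtilde n gs) f /\
                                    forall a, In a IM -> v a = coef f a).
  destruct (cone_separation _ IM Wq (fun a => coef l a)) with dl as [d [Hd1 Hd2]]; auto.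
  - intros u v [f [Hf Ef]] [g [Hg Eg]]. exists (f ++ g). split; [apply Qk_add; auto|].
    intros a Ha. rewrite coef_app, Ef, Eg; auto.
  - intros t u Ht [f [Hf Ef]]. exists (pscale t f). split; [apply Qk_scale; auto|].
    intros a Ha. rewrite coef_pscale, Ef; auto.
  - exists []. split; [apply Qk_nil|]. intros; rewrite coef_nil; auto.
  - intros w [f [Hf Ef]]. specialize (Hfar f Hf). unfold nsq, ip in *.
    erewrite rsum_ext; [exact Hfar|]. intros a Ha. cbv beta. rewrite Ef; auto.
  - assert (Dy : moment_conditions n k gs d).
    { apply moment_conditions_of_nonneg; auto. intros f Hf. rewrite HLy by exact (HQ f Hf).
      apply Hd2. exists f; split; auto. }
    specialize (Hdual d Dy). rewrite HLy in Hdual by auto. lra.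
Qed.

Lemma TH_first_moments n k gs x : (1 <= k)%nat -> Forall (wf n) gs ->
  Forall (fun g => (halfceil (pdeg g) <= k)%nat) gs -> Qk_closed (S n) k (Gtilde n gs) ->
  length x = n -> in_TH n k gs x ->
  forall dl, 0 < dl -> exists y, moment_conditions n k gs y /\
    nsq (seq 0 (S n)) (fun i => nth i (1 :: x) 0 - y (evec (S n) i)) < dl.
Proof.
  intros Hk Wg Hhc Hcl Lx [_ HTH] dl Hdl. apply NNPP. intros C.
  set (W := fun w : nat -> R => exists y, moment_conditions n k gs y /\ forall i, w i = y (evec (S n) i)).
  destruct (cone_separation _ (seq 0 (S n)) W (fun i => nth i (1 :: x) 0)) with dl as [c [Hc1 Hc2]]; auto.
  - intros u v [y1 [D1 E1]] [y2 [D2 E2]]. exists (fun a => y1 a + y2 a).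
    split; [apply moment_conditions_add; auto|]. intros i. rewrite E1, E2. auto.
  - intros t u Ht [y1 [D1 E1]]. exists (fun a => t * y1 a).
    split; [apply moment_conditions_scale; auto|]. intros i. rewrite E1. auto.
  - exists (fun _ => 0). split; [apply moment_conditions_zero|auto].
  - intros w [y [Dy Ew]]. apply Rnot_lt_le. intros C'. apply C. exists y. split; auto.
    unfold nsq, ip in *. erewrite rsum_ext; [exact C'|]. intros i _. cbv beta. rewrite Ew. auto.
  - assert (Hq : in_Qk (S n) k (Gtilde n gs) (linc (S n) c)).
    { apply Qk_of_dual_nonneg; auto.
      - intros a Ha. destruct (linc_linform (S n) c a Ha). apply monos_In. split; auto. lia.
      - intros y Dy. unfold Ly. rewrite rsum_linc. apply (Hc2 (fun i => y (evec (S n) i))).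
        exists y; split; auto. }
    pose proof (HTH _ Hq (linc_linform _ _)) as Hp.
    unfold peval in Hp. rewrite (rsum_linc (S n) c (fun a => meval a (1 :: x))) in Hp. subst n. rewrite linear_eval_at in Hp.
    unfold ip in Hc1. lra.
Qed.

Lemma Omega_of_admissible n k gs y : moment_conditions n k gs y -> 0 < y (evec (S n) 0) ->
  in_Omega n k gs (map (fun i => y (evec (S n) (S i)) / y (evec (S n) 0)) (seq 0 n)).
Proof.
  intros Dy Ht. set (t := y (evec (S n) 0)) in *.
  split; [rewrite length_map, length_seq; auto|]. exists (fun a => / t * y a).
  destruct (moment_conditions_scale n k gs y (/ t) ltac:(left; apply Rinv_0_lt_compat; auto) Dy)
    as [D1 [D2 [D3 D4]]].
  repeat split; auto.
  - rewrite Ly_pvar. fold t. field. lra.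
  - intros i Hi. rewrite Ly_pvar, nth_map_seq by auto. fold t. simpl. unfold Rdiv. ring.
Qed.

Lemma CV_div (a t : nat -> R) x s : Un_cv a x -> Un_cv t s -> s <> 0 -> Un_cv (fun j => a j / t j) (x / s).
Proof.
  intros Ha Ht Hs. apply CV_mult; auto.
  apply (continuity_seq Rinv t s); auto.
  apply (continuity_pt_inv id); [apply derivable_continuous_pt, derivable_pt_id|exact Hs].
Qed.

Lemma closure_of_first_moments n k gs x : length x = n ->
  (forall dl, 0 < dl -> exists y, moment_conditions n k gs y /\
     nsq (seq 0 (S n)) (fun i => nth i (1 :: x) 0 - y (evec (S n) i)) < dl) ->
  in_closure n (in_Omega n k gs) x.
Proof.
  intros Lx Happ. set (p := fun i => nth i (1 :: x) 0).
  destruct (choose_seq (fun j y => moment_conditions n k gs y /\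
     nsq (seq 0 (S n)) (fun i => p i - y (evec (S n) i)) < / INR (S j))) as [ys Hys].
  { intros j. apply Happ, inv_S_pos. }
  assert (Hcv : forall i, (i < S n)%nat -> Un_cv (fun j => ys j (evec (S n) i)) (p i)).
  { intros i Hi. apply cv_of_sq_bound. intros j. destruct (Hys j) as [_ Hj].
    pose proof (sq_le_nsq (seq 0 (S n)) (fun i => p i - ys j (evec (S n) i)) i ltac:(apply in_seq; lia)). lra. }
  set (z := fun j => map (fun i => ys j (evec (S n) (S i)) / ys j (evec (S n) 0)) (seq 0 n)).
  set (Sd := fun j => rsum (fun i => (nth i x 0 - nth i (z j) 0) ^ 2) (seq 0 n)).
  assert (HSd : Un_cv Sd 0).
  { replace 0 with (rsum (fun i => (nth i x 0 - nth i x 0 / 1) ^ 2) (seq 0 n))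
      by (apply rsum_zero; intros; field).
    apply rsum_cv. intros i Hi. apply in_seq in Hi.
    apply (CV_ext (fun j => (nth i x 0 - ys j (evec (S n) (S i)) / ys j (evec (S n) 0)) ^ 2)).
    { intros j. unfold z. rewrite nth_map_seq by lia. auto. }
    apply CV_mult; [|apply CV_mult; [|apply CV_const]];
      apply CV_minus; try apply CV_const; apply CV_div; try lra;
      first [apply (Hcv (S i)); lia | apply (Hcv 0%nat); lia]. }
  split; auto. intros eps Heps.
  destruct (HSd (eps * eps)) as [N1 HN1]; [nra|].
  destruct (Hcv 0%nat ltac:(lia) (/ 2)) as [N2 HN2]; [lra|].
  specialize (HN1 (N1 + N2)%nat ltac:(lia)). specialize (HN2 (N1 + N2)%nat ltac:(lia)).
  unfold R_dist in HN1, HN2. apply Rabs_def2 in HN2 as [A1 A2]. unfold p in A1, A2. simpl in A1, A2.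
  exists (z (N1 + N2)%nat). split; [|split; [unfold z; rewrite length_map, length_seq; auto|]].
  - apply Omega_of_admissible; [apply Hys|lra].
  - unfold Defs.dist. rewrite rsum_combine by (unfold z; rewrite length_map, length_seq; auto).
    rewrite Lx, <- (sqrt_pow2 eps) by lra. apply sqrt_lt_1_alt. split.
    + apply rsum_nonneg; intros; apply pow2_ge_0.
    + fold (Sd (N1 + N2)%nat). rewrite Rminus_0_r in HN1. apply Rabs_def2 in HN1 as [B1 B2]. simpl. lra.
Qed.

(* The two inclusions. *)
Theorem mainTheorem13 (n k : nat) (gs : list mpoly) :
  Forall (wf n) gs ->
  (exists x, in_S n gs x) ->
  (1 <= k)%nat ->
  Forall (fun g => (halfceil (pdeg g) <= k)%nat) gs ->
  Qk_closed (S n) k (Gtilde n gs) ->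
  forall x : list R, length x = n ->
    (in_TH n k gs x <-> in_closure n (in_Omega n k gs) x).
Proof.
  intros Wg _ Hk Hhc Hcl x Lx. split.
  - intros HTH. apply closure_of_first_moments; auto.
    apply TH_first_moments; auto.
  - apply closure_Omega_sub_TH; auto.
Qed.
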